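(* As $P_1P_2P_3$ ranges over all 3-periodics of $\mathcal{E}$, the Mittenpunkt $X_9^\dagger$ of the focus-inversive triangle moves along the circle with center and radius \[C_9^\dagger=\left(-c\left(1+\frac{\rho^2}{2b^2}\right),\,0\right),\qquad R_9^\dagger=\rho^2\,\frac{2a^2-b^2-\delta}{2ab^2}.\] Moreover, the inversion of $C_9^\dagger$ in the circle of radius $\rho$ centered at $f_1$ is $\left(-\frac{a^2+b^2}{c},0\right)$.
   Context: Let $a>b>0$ and let $\mathcal{E}$ be the ellipse $x^2/a^2+y^2/b^2=1$ (the elliptic billiard). Set $c=\sqrt{a^2-b^2}$, $\delta=\sqrt{a^4-a^2b^2+b^4}$, and let the foci be $f_1=(-c,0)$, $f_2=(c,0)$. A 3-periodic is a triangle $P_1P_2P_3$ with vertices on $\mathcal{E}$ such that at each vertex the normal to $\mathcal{E}$ bisects the angle formed by the two sides meeting at that vertex; these form a one-parameter family (there is one through every point of $\mathcal{E}$). Fix $\rho>0$. The focus-inversive triangle of a 3-periodic $P_1P_2P_3$ is the triangle with vertices $P_i^\dagger=f_1+(\rho/d_{1,i})^2(P_i-f_1)$, where $d_{1,i}=|P_i-f_1|$, i.e. the inversions of the $P_i$ in the circle of radius $\rho$ centered at $f_1$. The Mittenpunkt $X_9$ of a triangle is the point of concurrence of the lines joining each excenter to the midpoint of the corresponding side (equivalently, the point with barycentric coordinates $a_s(s-a_s):b_s(s-b_s):c_s(s-c_s)$, where $a_s,b_s,c_s$ are the side lengths and $s$ the semiperimeter). *)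

From Stdlib Require Import Reals.
Open Scope R_scope.

Definition pt : Type := (R * R)%type.

Definition edist (p q : pt) : R :=
  sqrt ((fst p - fst q) ^ 2 + (snd p - snd q) ^ 2).

Definition on_ellipse (a b : R) (p : pt) : Prop :=
  (fst p) ^ 2 / a ^ 2 + (snd p) ^ 2 / b ^ 2 = 1.

(* At vertex P with neighbours Q and R, the normal to the ellipse at P,
   direction (x/a^2, y/b^2), is parallel to the internal angle bisector
   u + v, where u, v are the unit vectors from P towards Q and R. *)
Definition normal_bisects (a b : R) (P Q S : pt) : Prop :=
  let ux := (fst Q - fst P) / edist P Q in
  let uy := (snd Q - snd P) / edist P Q in
  let vx := (fst S - fst P) / edist P S in
  let vy := (snd S - snd P) / edist P S in
  (ux + vx) * (snd P / b ^ 2) - (uy + vy) * (fst P / a ^ 2) = 0.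

Definition three_periodic (a b : R) (P1 P2 P3 : pt) : Prop :=
  P1 <> P2 /\ P2 <> P3 /\ P1 <> P3 /\
  on_ellipse a b P1 /\ on_ellipse a b P2 /\ on_ellipse a b P3 /\
  normal_bisects a b P1 P2 P3 /\
  normal_bisects a b P2 P3 P1 /\
  normal_bisects a b P3 P1 P2.

Definition cfoc (a b : R) : R := sqrt (a ^ 2 - b ^ 2).
Definition delta (a b : R) : R := sqrt (a ^ 4 - a ^ 2 * b ^ 2 + b ^ 4).
Definition f1 (a b : R) : pt := (- cfoc a b, 0).

Definition focus_inv (a b rho : R) (P : pt) : pt :=
  let d := edist P (f1 a b) in
  (fst (f1 a b) + (rho / d) ^ 2 * (fst P - fst (f1 a b)),
   snd (f1 a b) + (rho / d) ^ 2 * (snd P - snd (f1 a b))).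

(* Mittenpunkt X9 via barycentrics a_s(s-a_s) : b_s(s-b_s) : c_s(s-c_s). *)
Definition mittenpunkt (A B C : pt) : pt :=
  let la := edist B C in
  let lb := edist C A in
  let lc := edist A B in
  let s := (la + lb + lc) / 2 in
  let wa := la * (s - la) in
  let wb := lb * (s - lb) in
  let wc := lc * (s - lc) in
  let w := wa + wb + wc in
  ((wa * fst A + wb * fst B + wc * fst C) / w,
   (wa * snd A + wb * snd B + wc * snd C) / w).

Definition C9dag (a b rho : R) : pt :=
  (- cfoc a b * (1 + rho ^ 2 / (2 * b ^ 2)), 0).

Definition R9dag (a b rho : R) : R :=
  rho ^ 2 * (2 * a ^ 2 - b ^ 2 - delta a b) / (2 * a * b ^ 2).

(* Normalize the ellipse to the unit circle by (x, y) |-> (x/a, y/b).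
   The reflection law at a vertex says that Joachimsthal's quantity
   (ellipse_form P Q - 1) / |PQ| is the same for both chords at that vertex,
   hence common to the three sides of a 3-periodic. In the normalized picture
   the three chords are then pairwise "conjugate" for one quadratic form, and
   closure of the triangle forces the common value to be -j, where j > 0
   solves j^4 c^4 + 2 j^2 (a^2 + b^2) = 3 (one caustic for all 3-periodics).
   With m = j c, each vertex is described by the parameter u = x / (j a^2):
   its focal distance, the opposite side, the sides of the inverted triangle
   and the powers of the inverted vertices with respect to C9dag are explicit
   rational functions of m and u, and the parameters of the other two
   vertices satisfy Vieta relations in u. Writing the Mittenpunkt as the
   weighted centroid with weights l (s - l) reduces the claim to a balance
   identity between these rational functions, checked through a symmetric-
   function certificate. *)

From Stdlib Require Import Reals Rgeom Lra Psatz.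
Open Scope R_scope.

Lemma sq_pos x : x <> 0 -> 0 < x ^ 2.
Proof. intro h. pose proof (Rsqr_pos_lt x h). unfold Rsqr in *. nra. Qed.

Lemma sq_eq_zero x : x ^ 2 = 0 -> x = 0.
Proof. intro h. destruct (Req_dec x 0) as [e | e]; [exact e |]. pose proof (sq_pos x e). lra. Qed.

Lemma sq_eq_cases u v : u ^ 2 = v ^ 2 -> u = v \/ u = - v.
Proof.
  intro h. assert (E : (u - v) * (u + v) = 0) by nra.
  destruct (Rmult_integral _ _ E); [left | right]; lra.
Qed.

Lemma edist_sym p q : edist p q = edist q p.
Proof. unfold edist. f_equal. ring. Qed.

Lemma edist_nonneg p q : 0 <= edist p q.
Proof. apply sqrt_pos. Qed.

Lemma edist_sq p q : edist p q ^ 2 = (fst p - fst q) ^ 2 + (snd p - snd q) ^ 2.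
Proof.
  apply pow2_sqrt.
  pose proof (pow2_ge_0 (fst p - fst q)); pose proof (pow2_ge_0 (snd p - snd q)); lra.
Qed.

Lemma edist_eq p q r :
  0 <= r -> (fst p - fst q) ^ 2 + (snd p - snd q) ^ 2 = r ^ 2 -> edist p q = r.
Proof. intros hr h. unfold edist. rewrite h. apply sqrt_pow2, hr. Qed.

Lemma edist_pos p q : p <> q -> 0 < edist p q.
Proof.
  intro hpq. destruct (Rle_lt_or_eq_dec 0 (edist p q) (edist_nonneg p q)) as [h | h]; [exact h |].
  exfalso. apply hpq. pose proof (edist_sq p q) as E. rewrite <- h in E.
  destruct p as [x y], q as [x' y']; cbn [fst snd] in E.
  pose proof (pow2_ge_0 (x - x')); pose proof (pow2_ge_0 (y - y')).
  assert (hx : (x - x') ^ 2 = 0) by lra. assert (hy : (y - y') ^ 2 = 0) by lra.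
  apply sq_eq_zero in hx. apply sq_eq_zero in hy. f_equal; lra.
Qed.

Lemma edist_triangle p q r : edist p r <= edist p q + edist q r.
Proof.
  destruct p as [x y], q as [x' y'], r as [x'' y''].
  pose proof (triangle x y x'' y'' x' y') as T. unfold dist_euc in T. rewrite !Rsqr_pow2 in T.
  exact T.
Qed.

(** The reflection law and Joachimsthal's invariant. *)

Definition ellipse_form (a b : R) (p q : pt) : R :=
  fst p * fst q / a ^ 2 + snd p * snd q / b ^ 2.

Lemma ellipse_form_sym a b p q : ellipse_form a b p q = ellipse_form a b q p.
Proof. unfold ellipse_form, Rdiv. ring. Qed.

Definition joachimsthal (a b : R) (p q : pt) : R :=
  (ellipse_form a b p q - 1) / edist p q.

Lemma bisector_projections ux uy vx vy nx ny :
  ux ^ 2 + uy ^ 2 = 1 -> vx ^ 2 + vy ^ 2 = 1 ->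
  (ux + vx) * ny - (uy + vy) * nx = 0 ->
  (ux + vx <> 0 \/ uy + vy <> 0) ->
  ux * nx + uy * ny = vx * nx + vy * ny.
Proof.
  intros hu hv hpar hnz.
  assert (hsum : 0 < (ux + vx) ^ 2 + (uy + vy) ^ 2).
  { pose proof (pow2_ge_0 (ux + vx)); pose proof (pow2_ge_0 (uy + vy)).
    destruct hnz as [h | h]; pose proof (sq_pos _ h); lra. }
  assert (hid : ((ux - vx) * nx + (uy - vy) * ny) * ((ux + vx) ^ 2 + (uy + vy) ^ 2)
     = ((ux ^ 2 + uy ^ 2) - (vx ^ 2 + vy ^ 2)) * (nx * (ux + vx) + ny * (uy + vy))
       - ((ux - vx) * (uy + vy) - (uy - vy) * (ux + vx)) * ((ux + vx) * ny - (uy + vy) * nx))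
    by ring.
  rewrite hu, hv, hpar in hid.
  assert (h0 : (ux - vx) * nx + (uy - vy) * ny = 0).
  { apply (Rmult_eq_reg_r ((ux + vx) ^ 2 + (uy + vy) ^ 2)); lra. }
  lra.
Qed.

Lemma ellipse_strictly_convex a b P Q S l l' :
  0 < a -> 0 < b -> 0 < l -> 0 < l' ->
  on_ellipse a b P -> on_ellipse a b Q -> on_ellipse a b S ->
  l * (fst Q - fst P) + l' * (fst S - fst P) = 0 ->
  l * (snd Q - snd P) + l' * (snd S - snd P) = 0 -> Q = S.
Proof.
  unfold on_ellipse. destruct P as [x y], Q as [x2 y2], S as [x3 y3]; cbn [fst snd].
  intros ha hb hl hl' eP eQ eS hx hy.
  assert (hxP : (l + l') * x = l * x2 + l' * x3) by lra.
  assert (hyP : (l + l') * y = l * y2 + l' * y3) by lra.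
  (* Expanding the equation of the ellipse at P gives [F(Q - S) = 0]. *)
  assert (hF : l * l' * ((x2 - x3) ^ 2 / a ^ 2 + (y2 - y3) ^ 2 / b ^ 2) = 0).
  { transitivity ((l + l') * (l * (x2 ^ 2 / a ^ 2 + y2 ^ 2 / b ^ 2)
                              + l' * (x3 ^ 2 / a ^ 2 + y3 ^ 2 / b ^ 2))
                  - (((l + l') * x) ^ 2 / a ^ 2 + ((l + l') * y) ^ 2 / b ^ 2)).
    - rewrite hxP, hyP. field. split; lra.
    - replace (((l + l') * x) ^ 2 / a ^ 2 + ((l + l') * y) ^ 2 / b ^ 2)
        with ((l + l') ^ 2 * (x ^ 2 / a ^ 2 + y ^ 2 / b ^ 2)) by (field; lra).
      rewrite eP, eQ, eS. ring. }
  assert (hxx : 0 <= (x2 - x3) ^ 2 / a ^ 2) by (apply Rle_mult_inv_pos; [apply pow2_ge_0 | nra]).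
  assert (hyy : 0 <= (y2 - y3) ^ 2 / b ^ 2) by (apply Rle_mult_inv_pos; [apply pow2_ge_0 | nra]).
  assert (hll : 0 < l * l') by nra.
  assert (hsum : (x2 - x3) ^ 2 / a ^ 2 + (y2 - y3) ^ 2 / b ^ 2 = 0).
  { apply (Rmult_eq_reg_l (l * l')); lra. }
  assert (ex : (x2 - x3) ^ 2 = 0).
  { replace ((x2 - x3) ^ 2) with (a ^ 2 * ((x2 - x3) ^ 2 / a ^ 2)) by (field; lra). nra. }
  assert (ey : (y2 - y3) ^ 2 = 0).
  { replace ((y2 - y3) ^ 2) with (b ^ 2 * ((y2 - y3) ^ 2 / b ^ 2)) by (field; lra). nra. }
  apply sq_eq_zero in ex. apply sq_eq_zero in ey. f_equal; lra.
Qed.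

Lemma unit_direction p q : p <> q ->
  ((fst q - fst p) / edist p q) ^ 2 + ((snd q - snd p) / edist p q) ^ 2 = 1.
Proof.
  intro hpq. pose proof (edist_pos p q hpq) as hd. pose proof (edist_sq p q) as hs.
  transitivity (((fst p - fst q) ^ 2 + (snd p - snd q) ^ 2) / edist p q ^ 2).
  - field. lra.
  - rewrite <- hs. field. lra.
Qed.

(* Projecting the unit directions on the
   normal (x/a^2, y/b^2) gives [(ellipse_form P Q - 1) / |PQ|]. *)
Lemma reflection_joachimsthal a b P Q S :
  0 < a -> 0 < b -> on_ellipse a b P -> on_ellipse a b Q -> on_ellipse a b S ->
  P <> Q -> P <> S -> Q <> S -> normal_bisects a b P Q S ->
  joachimsthal a b P Q = joachimsthal a b P S.
Proof.
  intros ha hb eP eQ eS hPQ hPS hQS hn.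
  pose proof (edist_pos P Q hPQ) as dq. pose proof (edist_pos P S hPS) as ds.
  pose proof (unit_direction P Q hPQ) as hu. pose proof (unit_direction P S hPS) as hv.
  unfold normal_bisects in hn. unfold joachimsthal, ellipse_form.
  assert (hnz : (fst Q - fst P) / edist P Q + (fst S - fst P) / edist P S <> 0 \/
                (snd Q - snd P) / edist P Q + (snd S - snd P) / edist P S <> 0).
  { destruct (Req_dec ((fst Q - fst P) / edist P Q + (fst S - fst P) / edist P S) 0) as [h1 | h1];
      [| now left].
    destruct (Req_dec ((snd Q - snd P) / edist P Q + (snd S - snd P) / edist P S) 0) as [h2 | h2];
      [| now right].
    exfalso. apply hQS.
    apply (ellipse_strictly_convex a b P Q S (/ edist P Q) (/ edist P S)); try assumption;
      try (apply Rinv_0_lt_compat; assumption).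
    - rewrite <- h1. field. lra.
    - rewrite <- h2. field. lra. }
  pose proof (bisector_projections _ _ _ _ (fst P / a ^ 2) (snd P / b ^ 2) hu hv hn hnz) as K.
  unfold on_ellipse in eP.
  replace ((fst P * fst Q / a ^ 2 + snd P * snd Q / b ^ 2 - 1) / edist P Q) with
    ((fst Q - fst P) / edist P Q * (fst P / a ^ 2) + (snd Q - snd P) / edist P Q * (snd P / b ^ 2))
    by (rewrite <- eP; field; repeat split; lra).
  replace ((fst P * fst S / a ^ 2 + snd P * snd S / b ^ 2 - 1) / edist P S) with
    ((fst S - fst P) / edist P S * (fst P / a ^ 2) + (snd S - snd P) / edist P S * (snd P / b ^ 2))
    by (rewrite <- eP; field; repeat split; lra).
  exact K.
Qed.

(** Through
    [(x, y) |-> (x/a, y/b)] the ellipse becomes the unit circle; a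
    billiard chord with Joachimsthal quantity J becomes a chord
    [(X, Y), (X', Y')] with [(1 - M) X X' + (1 + M) Y Y' = k], where
    [M = J^2 (a^2 - b^2)] and [k = 1 - J^2 (a^2 + b^2)]. *)

Definition on_unit_circle (X Y : R) : Prop := X ^ 2 + Y ^ 2 = 1.

(* The relation between the endpoints of a chord tangent to the caustic. *)
Definition conjugate (M k X Y X' Y' : R) : Prop :=
  (1 - M) * (X * X') + (1 + M) * (Y * Y') = k.

Lemma conjugate_sym M k X Y X' Y' : conjugate M k X Y X' Y' -> conjugate M k X' Y' X Y.
Proof. unfold conjugate. intro h. rewrite <- h. ring. Qed.

Lemma one_minus_dot_pos X Y X' Y' :
  on_unit_circle X Y -> on_unit_circle X' Y' -> (X <> X' \/ Y <> Y') ->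
  0 < 1 - (X * X' + Y * Y').
Proof.
  unfold on_unit_circle. intros h h' hn.
  pose proof (pow2_ge_0 (X - X')); pose proof (pow2_ge_0 (Y - Y')).
  assert (E : 1 - (X * X' + Y * Y') = ((X - X') ^ 2 + (Y - Y') ^ 2) / 2) by nra.
  rewrite E. destruct hn as [hn | hn]; pose proof (sq_pos _ (Rminus_eq_contra _ _ hn)); lra.
Qed.

Lemma chord_length_sq a b X Y X' Y' :
  on_unit_circle X Y -> on_unit_circle X' Y' ->
  a ^ 2 * (X - X') ^ 2 + b ^ 2 * (Y - Y') ^ 2
  = (1 - (X * X' + Y * Y')) * ((a ^ 2 + b ^ 2) - (a ^ 2 - b ^ 2) * (X * X' - Y * Y')).
Proof.
  unfold on_unit_circle. intros h h'.
  replace (a ^ 2 * (X - X') ^ 2 + b ^ 2 * (Y - Y') ^ 2) with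
    ((1 - (X * X' + Y * Y')) * ((a ^ 2 + b ^ 2) - (a ^ 2 - b ^ 2) * (X * X' - Y * Y'))
     + a ^ 2 * ((X ^ 2 + Y ^ 2 - 1) * Y' ^ 2 + (1 - X ^ 2) * (X' ^ 2 + Y' ^ 2 - 1))
     + b ^ 2 * ((X ^ 2 + Y ^ 2 - 1) * X' ^ 2 + (1 - Y ^ 2) * (X' ^ 2 + Y' ^ 2 - 1))) by ring.
  rewrite h, h'. ring.
Qed.

Lemma chord_conjugate a b X Y X' Y' J d :
  on_unit_circle X Y -> on_unit_circle X' Y' -> (X <> X' \/ Y <> Y') ->
  d ^ 2 = a ^ 2 * (X - X') ^ 2 + b ^ 2 * (Y - Y') ^ 2 -> X * X' + Y * Y' - 1 = J * d ->
  conjugate (J ^ 2 * (a ^ 2 - b ^ 2)) (1 - J ^ 2 * (a ^ 2 + b ^ 2)) X Y X' Y'.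
Proof.
  intros h h' hn hd hJ. unfold conjugate.
  pose proof (one_minus_dot_pos X Y X' Y' h h' hn) as hp.
  pose proof (chord_length_sq a b X Y X' Y' h h') as hc.
  set (g := 1 - (X * X' + Y * Y')) in *.
  assert (E : g * g = J ^ 2 * (g * ((a ^ 2 + b ^ 2) - (a ^ 2 - b ^ 2) * (X * X' - Y * Y')))).
  { rewrite <- hc, <- hd.
    replace g with (- (J * d)) by (unfold g; lra). ring. }
  assert (E' : g = J ^ 2 * ((a ^ 2 + b ^ 2) - (a ^ 2 - b ^ 2) * (X * X' - Y * Y'))).
  { apply (Rmult_eq_reg_l g); [rewrite E; ring | lra]. }
  unfold g in E'. lra.
Qed.

Lemma line_circle_vieta al be k X Y X' Y' :
  on_unit_circle X Y -> on_unit_circle X' Y' -> al * X + be * Y = k -> al * X' + be * Y' = k ->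
  (X <> X' \/ Y <> Y') -> al ^ 2 + be ^ 2 <> 0 ->
  (al ^ 2 + be ^ 2) * (X * X') = k ^ 2 - be ^ 2 /\
  (al ^ 2 + be ^ 2) * (Y * Y') = k ^ 2 - al ^ 2 /\
  (al ^ 2 + be ^ 2) * (X + X') = 2 * k * al.
Proof.
  unfold on_unit_circle. intros h h' l l' hn hN.
  set (N := al ^ 2 + be ^ 2) in *.
  set (t := al * (Y' - Y) - be * (X' - X)).
  (* The chord direction is (-be, al); t is the signed chord length times N. *)
  assert (hl : al * (X' - X) + be * (Y' - Y) = 0) by lra.
  assert (ex : N * (X' - X) = - be * t).
  { transitivity (- be * t + al * (al * (X' - X) + be * (Y' - Y))); [unfold N, t; ring |].
    rewrite hl. ring. }
  assert (ey : N * (Y' - Y) = al * t).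
  { transitivity (al * t + be * (al * (X' - X) + be * (Y' - Y))); [unfold N, t; ring |].
    rewrite hl. ring. }
  assert (ht : t <> 0).
  { intro h0. rewrite h0 in ex, ey.
    assert (X' - X = 0) by (apply (Rmult_eq_reg_l N); [rewrite ex; ring | exact hN]).
    assert (Y' - Y = 0) by (apply (Rmult_eq_reg_l N); [rewrite ey; ring | exact hN]).
    destruct hn; lra. }
  assert (hc : N * t * (2 * (al * Y - be * X) + t) = 0).
  { transitivity (2 * N * (X * (N * (X' - X)) + Y * (N * (Y' - Y)))
                  + (N * (X' - X)) ^ 2 + (N * (Y' - Y)) ^ 2).
    - rewrite ex, ey. unfold N. ring.
    - replace (2 * N * (X * (N * (X' - X)) + Y * (N * (Y' - Y))) + (N * (X' - X)) ^ 2
                 + (N * (Y' - Y)) ^ 2) with (N ^ 2 * ((X' ^ 2 + Y' ^ 2) - (X ^ 2 + Y ^ 2))) by ring.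
      rewrite h, h'. ring. }
  assert (tv : t = 2 * (be * X - al * Y)).
  { assert (hNt : N * t <> 0) by (apply Rmult_integral_contrapositive; split; assumption).
    assert (2 * (al * Y - be * X) + t = 0)
      by (apply (Rmult_eq_reg_l (N * t)); [rewrite hc; ring | exact hNt]).
    lra. }
  assert (eX' : N * X' = N * X - be * t) by lra.
  assert (eY' : N * Y' = N * Y + al * t) by lra.
  rewrite tv in eX', eY'.
  repeat split.
  - replace (N * (X * X')) with (X * (N * X')) by ring. rewrite eX', <- l. unfold N.
    replace (be ^ 2) with (be ^ 2 * (X ^ 2 + Y ^ 2)) at 2 by (rewrite h; ring). ring.
  - replace (N * (Y * Y')) with (Y * (N * Y')) by ring. rewrite eY', <- l. unfold N.
    replace (al ^ 2) with (al ^ 2 * (X ^ 2 + Y ^ 2)) at 2 by (rewrite h; ring). ring.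
  - replace (N * (X + X')) with (N * X + N * X') by ring. rewrite eX', <- l. unfold N. ring.
Qed.

(** Throughout, [0 <= M] and [k < 1 - M] (true for billiard chords). *)

(* The polar line of a point of the circle is a genuine line. *)
Lemma polar_nondegenerate M k X Y X' Y' :
  on_unit_circle X Y -> 0 <= M -> k < 1 - M -> conjugate M k X Y X' Y' ->
  ((1 - M) * X) ^ 2 + ((1 + M) * Y) ^ 2 <> 0.
Proof.
  unfold on_unit_circle, conjugate. intros h hM hk hc h0.
  pose proof (pow2_ge_0 ((1 - M) * X)); pose proof (pow2_ge_0 ((1 + M) * Y)).
  assert (hX : (1 - M) * X = 0) by (apply sq_eq_zero; lra).
  assert (hY : (1 + M) * Y = 0) by (apply sq_eq_zero; lra).
  assert (Y = 0) by (destruct (Rmult_integral _ _ hY); lra). subst Y.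
  assert (M = 1) by (destruct (Rmult_integral _ _ hX) as [e | e]; [lra | subst X; exfalso; nra]).
  subst M.
  assert (k = 0) by (rewrite <- hc; ring). lra.
Qed.

(* Two points conjugate to a third lie on its polar line; Vieta's formulas
   then tie their conjugacy to the position of the third point. *)
Lemma vertex_closure M k Xi Yi Xj Yj Xk Yk :
  on_unit_circle Xi Yi -> on_unit_circle Xj Yj -> on_unit_circle Xk Yk ->
  (Xj <> Xk \/ Yj <> Yk) -> ((1 - M) * Xi) ^ 2 + ((1 + M) * Yi) ^ 2 <> 0 ->
  conjugate M k Xi Yi Xj Yj -> conjugate M k Xi Yi Xk Yk -> conjugate M k Xj Yj Xk Yk ->
  Xi ^ 2 * ((1 - M) ^ 2 * (k + 1 + M) - (1 + M) ^ 2 * (k + 1 - M))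
  = 2 * k ^ 2 - (1 + M) ^ 2 * (k + 1 - M).
Proof.
  unfold conjugate. intros hi hj hk hn hN pij pik pjk.
  destruct (line_circle_vieta ((1 - M) * Xi) ((1 + M) * Yi) k Xj Yj Xk Yk hj hk)
    as [v1 [v2 _]]; [rewrite <- pij; ring | rewrite <- pik; ring | exact hn | exact hN |].
  set (N := ((1 - M) * Xi) ^ 2 + ((1 + M) * Yi) ^ 2) in *.
  assert (E : (1 - M) * (k ^ 2 - ((1 + M) * Yi) ^ 2) + (1 + M) * (k ^ 2 - ((1 - M) * Xi) ^ 2)
              = k * N).
  { rewrite <- v1, <- v2.
    transitivity (N * ((1 - M) * (Xj * Xk) + (1 + M) * (Yj * Yk))); [ring |].
    rewrite pjk. ring. }
  unfold on_unit_circle in hi. unfold N in E.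
  transitivity (2 * k ^ 2 - (1 + M) ^ 2 * (k + 1 - M)
    - ((1 - M) * (k ^ 2 - ((1 + M) * Yi) ^ 2) + (1 + M) * (k ^ 2 - ((1 - M) * Xi) ^ 2)
       - k * (((1 - M) * Xi) ^ 2 + ((1 + M) * Yi) ^ 2))
    + (1 + M) ^ 2 * (k + 1 - M) * (1 - (Xi ^ 2 + Yi ^ 2))); [ring |].
  rewrite E, hi. ring.
Qed.

Lemma no_symmetric_triangle M k X1 Y1 X2 Y2 X3 Y3 :
  on_unit_circle X1 Y1 -> 0 <= M -> k < 1 - M ->
  X2 ^ 2 = X1 ^ 2 -> X3 ^ 2 = X1 ^ 2 -> Y2 ^ 2 = Y1 ^ 2 -> Y3 ^ 2 = Y1 ^ 2 ->
  (X1 <> X2 \/ Y1 <> Y2) -> (X1 <> X3 \/ Y1 <> Y3) -> (X2 <> X3 \/ Y2 <> Y3) ->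
  conjugate M k X1 Y1 X2 Y2 -> conjugate M k X1 Y1 X3 Y3 -> conjugate M k X2 Y2 X3 Y3 ->
  False.
Proof.
  unfold on_unit_circle, conjugate. intros h hM hk sx2 sx3 sy2 sy3 d12 d13 d23 p12 p13 p23.
  (* Up to symmetry the three points are (X, Y), (-X, Y), (X, -Y) or
     (-X, -Y); pairwise conjugacy then forces k = 0 and M = 1. *)
  destruct (sq_eq_cases _ _ sx2), (sq_eq_cases _ _ sx3), (sq_eq_cases _ _ sy2),
    (sq_eq_cases _ _ sy3); subst X2 X3 Y2 Y3;
    try (destruct d12; lra); try (destruct d13; lra); try (destruct d23; lra);
    assert (k = 0) by lra; assert ((1 - M) * (X1 * X1) = 0) by lra;
    assert ((1 + M) * (Y1 * Y1) = 0) by lra; nra.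
Qed.

Lemma triangle_closure M k X1 Y1 X2 Y2 X3 Y3 :
  on_unit_circle X1 Y1 -> on_unit_circle X2 Y2 -> on_unit_circle X3 Y3 -> 0 <= M -> k < 1 - M ->
  (X1 <> X2 \/ Y1 <> Y2) -> (X1 <> X3 \/ Y1 <> Y3) -> (X2 <> X3 \/ Y2 <> Y3) ->
  conjugate M k X1 Y1 X2 Y2 -> conjugate M k X1 Y1 X3 Y3 -> conjugate M k X2 Y2 X3 Y3 ->
  (1 - M) ^ 2 * (k + 1 + M) - (1 + M) ^ 2 * (k + 1 - M) = 0.
Proof.
  intros c1 c2 c3 hM hk d12 d13 d23 p12 p13 p23.
  pose proof (conjugate_sym _ _ _ _ _ _ p12) as p21.
  pose proof (conjugate_sym _ _ _ _ _ _ p13) as p31.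
  pose proof (conjugate_sym _ _ _ _ _ _ p23) as p32.
  pose proof (vertex_closure M k X1 Y1 X2 Y2 X3 Y3 c1 c2 c3 d23
                (polar_nondegenerate M k _ _ _ _ c1 hM hk p12) p12 p13 p23) as v1.
  pose proof (vertex_closure M k X2 Y2 X1 Y1 X3 Y3 c2 c1 c3 d13
                (polar_nondegenerate M k _ _ _ _ c2 hM hk p23) p21 p23 p13) as v2.
  pose proof (vertex_closure M k X3 Y3 X1 Y1 X2 Y2 c3 c1 c2 d12
                (polar_nondegenerate M k _ _ _ _ c3 hM hk p31) p31 p32 p12) as v3.
  set (B := (1 - M) ^ 2 * (k + 1 + M) - (1 + M) ^ 2 * (k + 1 - M)) in *.
  destruct (Req_dec B 0) as [h | h]; [exact h | exfalso].
  assert (sx2 : X2 ^ 2 = X1 ^ 2) by (apply (Rmult_eq_reg_r B); [rewrite v1, v2; reflexivity | exact h]).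
  assert (sx3 : X3 ^ 2 = X1 ^ 2) by (apply (Rmult_eq_reg_r B); [rewrite v1, v3; reflexivity | exact h]).
  unfold on_unit_circle in c1, c2, c3.
  apply (no_symmetric_triangle M k X1 Y1 X2 Y2 X3 Y3); auto; lra.
Qed.

Lemma ellipse_unit_circle a b p :
  0 < a -> 0 < b -> on_ellipse a b p -> on_unit_circle (fst p / a) (snd p / b).
Proof. unfold on_ellipse, on_unit_circle. intros ha hb h. rewrite <- h. field. lra. Qed.

Lemma ellipse_form_unit a b p q : 0 < a -> 0 < b ->
  ellipse_form a b p q = fst p / a * (fst q / a) + snd p / b * (snd q / b).
Proof. intros ha hb. unfold ellipse_form. field. lra. Qed.

Lemma edist_sq_unit a b p q : 0 < a -> 0 < b ->
  edist p q ^ 2 = a ^ 2 * (fst p / a - fst q / a) ^ 2 + b ^ 2 * (snd p / b - snd q / b) ^ 2.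
Proof. intros ha hb. rewrite edist_sq. field. lra. Qed.

Lemma unit_coords_neq a b p q : 0 < a -> 0 < b -> p <> q ->
  fst p / a <> fst q / a \/ snd p / b <> snd q / b.
Proof.
  intros ha hb hpq.
  destruct (Req_dec (fst p / a) (fst q / a)) as [ex | ex]; [| now left].
  destruct (Req_dec (snd p / b) (snd q / b)) as [ey | ey]; [| now right].
  exfalso. apply hpq. destruct p as [x y], q as [x' y']; cbn [fst snd] in *.
  f_equal; [apply (Rmult_eq_reg_r (/ a)) | apply (Rmult_eq_reg_r (/ b))];
    try exact ex; try exact ey; apply Rinv_neq_0_compat; lra.
Qed.

Lemma billiard_chord_conjugate a b p q J :
  0 < a -> 0 < b -> on_ellipse a b p -> on_ellipse a b q -> p <> q ->
  ellipse_form a b p q - 1 = J * edist p q ->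
  conjugate (J ^ 2 * (a ^ 2 - b ^ 2)) (1 - J ^ 2 * (a ^ 2 + b ^ 2))
    (fst p / a) (snd p / b) (fst q / a) (snd q / b).
Proof.
  intros ha hb ep eq hpq hJ.
  apply (chord_conjugate a b _ _ _ _ J (edist p q)).
  - exact (ellipse_unit_circle a b p ha hb ep).
  - exact (ellipse_unit_circle a b q ha hb eq).
  - exact (unit_coords_neq a b p q ha hb hpq).
  - exact (edist_sq_unit a b p q ha hb).
  - rewrite <- ellipse_form_unit by assumption. exact hJ.
Qed.

(* Distinct points of the ellipse satisfy [ellipse_form p q < 1]. *)
Lemma joachimsthal_neg a b p q :
  0 < a -> 0 < b -> on_ellipse a b p -> on_ellipse a b q -> p <> q -> joachimsthal a b p q < 0.
Proof.
  intros ha hb ep eq hpq. unfold joachimsthal.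
  pose proof (one_minus_dot_pos _ _ _ _ (ellipse_unit_circle a b p ha hb ep)
                (ellipse_unit_circle a b q ha hb eq) (unit_coords_neq a b p q ha hb hpq)) as h.
  rewrite <- ellipse_form_unit in h by assumption.
  assert (0 < / edist p q) by (apply Rinv_0_lt_compat, edist_pos, hpq).
  unfold Rdiv. nra.
Qed.

Lemma periodic_joachimsthal a b P1 P2 P3 :
  0 < a -> 0 < b -> three_periodic a b P1 P2 P3 ->
  let J := joachimsthal a b P1 P2 in
  ellipse_form a b P1 P2 - 1 = J * edist P1 P2 /\
  ellipse_form a b P1 P3 - 1 = J * edist P1 P3 /\
  ellipse_form a b P2 P3 - 1 = J * edist P2 P3.
Proof.
  intros ha hb (d12 & d23 & d13 & e1 & e2 & e3 & n1 & n2 & _) J.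
  assert (V1 := reflection_joachimsthal a b _ _ _ ha hb e1 e2 e3 d12 d13 d23 n1).
  assert (V2 := reflection_joachimsthal a b _ _ _ ha hb e2 e3 e1 d23 (not_eq_sym d12)
                  (not_eq_sym d13) n2).
  unfold J, joachimsthal in *. rewrite (ellipse_form_sym a b P2 P1), (edist_sym P2 P1) in V2.
  pose proof (edist_pos _ _ d12); pose proof (edist_pos _ _ d13); pose proof (edist_pos _ _ d23).
  repeat split.
  - unfold J. field. lra.
  - rewrite V1. field. lra.
  - rewrite <- V2. field. lra.
Qed.

Lemma periodic_caustic a b P1 P2 P3 :
  0 < b -> b < a -> three_periodic a b P1 P2 P3 ->
  exists j, 0 < j /\ j ^ 4 * (a ^ 2 - b ^ 2) ^ 2 + 2 * j ^ 2 * (a ^ 2 + b ^ 2) = 3 /\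
    ellipse_form a b P1 P2 - 1 = - j * edist P1 P2 /\
    ellipse_form a b P1 P3 - 1 = - j * edist P1 P3 /\
    ellipse_form a b P2 P3 - 1 = - j * edist P2 P3.
Proof.
  intros hb hab hP. assert (ha : 0 < a) by lra.
  destruct (periodic_joachimsthal a b P1 P2 P3 ha hb hP) as (h12 & h13 & h23).
  destruct hP as (d12 & d23 & d13 & e1 & e2 & e3 & _).
  pose proof (joachimsthal_neg a b P1 P2 ha hb e1 e2 d12) as hneg.
  set (J := joachimsthal a b P1 P2) in *.
  assert (hJ2 : 0 < J ^ 2) by (apply sq_pos; lra).
  assert (hc2 : 0 < a ^ 2 - b ^ 2) by nra.
  set (M := J ^ 2 * (a ^ 2 - b ^ 2)). set (k := 1 - J ^ 2 * (a ^ 2 + b ^ 2)).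
  assert (hB : (1 - M) ^ 2 * (k + 1 + M) - (1 + M) ^ 2 * (k + 1 - M) = 0).
  { apply (triangle_closure _ _ (fst P1 / a) (snd P1 / b) (fst P2 / a) (snd P2 / b)
             (fst P3 / a) (snd P3 / b));
      try apply ellipse_unit_circle; try apply unit_coords_neq; try apply billiard_chord_conjugate;
      try assumption.
    - apply Rmult_le_pos; lra.
    - assert (0 < J ^ 2 * b ^ 2) by (apply Rmult_lt_0_compat; nra). unfold M, k. lra. }
  (* The closure relation factors as [2 M (caustic equation)], with [M > 0]. *)
  assert (E : 2 * M * ((- J) ^ 4 * (a ^ 2 - b ^ 2) ^ 2 + 2 * (- J) ^ 2 * (a ^ 2 + b ^ 2) - 3) = 0)
    by (rewrite <- hB; unfold M, k; ring).
  assert (hM : 0 < M) by (unfold M; nra).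
  exists (- J). repeat split.
  - lra.
  - apply Rmult_integral in E as [E | E]; lra.
  - rewrite h12. ring.
  - rewrite h13. ring.
  - rewrite h23. ring.
Qed.

Definition side_den (m u : R) : R := 1 + m ^ 2 - m ^ 2 * (3 - m ^ 2) * u ^ 2.
Definition side_num (m u : R) : R := (1 + m ^ 2) ^ 2 - 4 * m ^ 2 * u ^ 2.
Definition focal_factor (m u : R) : R := 1 + m * u.

Lemma one_plus_sq_pos m : 0 < 1 + m ^ 2.
Proof. pose proof (pow2_ge_0 m). lra. Qed.

Lemma cfoc_sq a b : 0 < b -> b < a -> cfoc a b ^ 2 = a ^ 2 - b ^ 2.
Proof. intros hb hab. apply pow2_sqrt. nra. Qed.

Lemma cfoc_pos a b : 0 < b -> b < a -> 0 < cfoc a b.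
Proof. intros hb hab. apply sqrt_lt_R0. nra. Qed.

Lemma caustic_relations a b j :
  0 < b -> b < a -> 0 < j -> j ^ 4 * (a ^ 2 - b ^ 2) ^ 2 + 2 * j ^ 2 * (a ^ 2 + b ^ 2) = 3 ->
  let m := j * cfoc a b in
  m ^ 2 < 1 /\ m ^ 2 = j ^ 2 * (a ^ 2 - b ^ 2) /\ 4 * j ^ 2 * a ^ 2 = (3 - m ^ 2) * (1 + m ^ 2).
Proof.
  intros hb hab hj hq m.
  pose proof (cfoc_sq a b hb hab) as hc2.
  assert (hm2 : m ^ 2 = j ^ 2 * (a ^ 2 - b ^ 2)) by (unfold m; rewrite <- hc2; ring).
  assert (hb2 : 4 * j ^ 2 * b ^ 2 = (1 - m ^ 2) * (3 + m ^ 2)).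
  { rewrite hm2. lra. }
  assert (hjb : 0 < 4 * j ^ 2 * b ^ 2) by (pose proof (pow_lt j 2 hj); pose proof (pow_lt b 2 hb); nra).
  repeat split.
  - pose proof (pow2_ge_0 m). nra.
  - exact hm2.
  - rewrite hm2. lra.
Qed.

Lemma periodic_chord_conjugate a b j m p q :
  0 < a -> 0 < b -> m ^ 2 = j ^ 2 * (a ^ 2 - b ^ 2) ->
  4 * j ^ 2 * a ^ 2 = (3 - m ^ 2) * (1 + m ^ 2) ->
  on_ellipse a b p -> on_ellipse a b q -> p <> q ->
  ellipse_form a b p q - 1 = - j * edist p q ->
  conjugate (m ^ 2) ((m ^ 4 - 1) / 2) (fst p / a) (snd p / b) (fst q / a) (snd q / b).
Proof.
  intros ha hb hm2 hT ep eq hpq h.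
  pose proof (billiard_chord_conjugate a b p q (- j) ha hb ep eq hpq h) as K.
  replace (m ^ 2) with ((- j) ^ 2 * (a ^ 2 - b ^ 2)) by (rewrite hm2; ring).
  replace ((m ^ 4 - 1) / 2) with (1 - (- j) ^ 2 * (a ^ 2 + b ^ 2)); [exact K |].
  replace (m ^ 4) with ((m ^ 2) ^ 2) by ring. rewrite hm2.
  apply (Rmult_eq_reg_l 4); [| lra].
  replace (4 * (1 - (- j) ^ 2 * (a ^ 2 + b ^ 2))) with
    (4 - 2 * (4 * j ^ 2 * a ^ 2) + 4 * (j ^ 2 * (a ^ 2 - b ^ 2))) by ring.
  rewrite hT, <- hm2. field.
Qed.

Lemma polar_parametrization m s X Y Xj Yj Xk Yk u :
  0 < s -> 4 * s ^ 2 = (3 - m ^ 2) * (1 + m ^ 2) -> m ^ 2 < 1 ->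
  on_unit_circle X Y -> on_unit_circle Xj Yj -> on_unit_circle Xk Yk -> (Xj <> Xk \/ Yj <> Yk) ->
  conjugate (m ^ 2) ((m ^ 4 - 1) / 2) X Y Xj Yj -> conjugate (m ^ 2) ((m ^ 4 - 1) / 2) X Y Xk Yk ->
  X = s * u ->
  side_den m u <> 0 /\
  1 - (Xj * Xk + Yj * Yk) = 2 * s ^ 2 * side_num m u / ((1 + m ^ 2) * side_den m u) /\
  side_den m u * (Xj / s + Xk / s) = - (1 - m ^ 2) ^ 2 * u /\
  side_den m u * (Xj / s * (Xk / s)) = (1 + m ^ 2) * (u ^ 2 - 1).
Proof.
  intros hs hT hm1 c cj ck hn pj pk hu.
  set (k := (m ^ 4 - 1) / 2) in *.
  assert (hk : k < 1 - m ^ 2) by (unfold k; pose proof (pow2_ge_0 m); nra).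
  pose proof (polar_nondegenerate _ _ _ _ _ _ c (pow2_ge_0 m) hk pj) as hN.
  unfold conjugate in pj, pk.
  destruct (line_circle_vieta ((1 - m ^ 2) * X) ((1 + m ^ 2) * Y) k Xj Yj Xk Yk cj ck)
    as (v1 & v2 & v3); [rewrite <- pj; ring | rewrite <- pk; ring | exact hn | exact hN |].
  unfold on_unit_circle in c.
  set (N := ((1 - m ^ 2) * X) ^ 2 + ((1 + m ^ 2) * Y) ^ 2) in *.
  pose proof (one_plus_sq_pos m) as h1m.
  (* Eliminating [Y^2 = 1 - X^2] and [X = s u]. *)
  assert (hNe : N = (1 + m ^ 2) * side_den m u).
  { transitivity ((1 + m ^ 2) * side_den m u + (1 + m ^ 2) ^ 2 * (X ^ 2 + Y ^ 2 - 1)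
                  - m ^ 2 * u ^ 2 * (4 * s ^ 2 - (3 - m ^ 2) * (1 + m ^ 2)));
      [unfold N, side_den; rewrite hu; ring | rewrite c, hT; ring]. }
  assert (hden : side_den m u <> 0) by (intro h0; apply hN; fold N; rewrite hNe, h0; ring).
  assert (hKa : N - k ^ 2 = s ^ 2 * side_num m u).
  { transitivity (s ^ 2 * side_num m u + (1 + m ^ 2) ^ 2 * (X ^ 2 + Y ^ 2 - 1)
                  - (1 + m ^ 2) ^ 2 / 4 * (4 * s ^ 2 - (3 - m ^ 2) * (1 + m ^ 2)));
      [unfold N, k, side_num; rewrite hu; field | rewrite c, hT; ring]. }
  repeat split; [exact hden | | |].
  - apply (Rmult_eq_reg_l N); [| fold N in hN; exact hN].
    transitivity (2 * (N - k ^ 2)).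
    + transitivity (N - (N * (Xj * Xk) + N * (Yj * Yk))); [ring |].
      rewrite v1, v2. unfold N. ring.
    + rewrite hKa, hNe. field. lra.
  - apply (Rmult_eq_reg_l ((1 + m ^ 2) * s)); [| nra].
    transitivity (N * (Xj + Xk)); [rewrite hNe; field; lra |].
    rewrite v3, hu. unfold k. field.
  - apply (Rmult_eq_reg_l ((1 + m ^ 2) * s ^ 2)); [| nra].
    transitivity (N * (Xj * Xk)); [rewrite hNe; field; lra |].
    rewrite v1. replace (((1 + m ^ 2) * Y) ^ 2) with ((1 + m ^ 2) ^ 2 * (1 - X ^ 2)) by nra.
    rewrite hu. unfold k. replace ((s * u) ^ 2) with (s ^ 2 * u ^ 2) by ring.
    replace (s ^ 2) with ((3 - m ^ 2) * (1 + m ^ 2) / 4) by lra. field.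
Qed.

Definition vertex_param (a j : R) (p : pt) : R := fst p / (j * a ^ 2).

Lemma periodic_vertex a b j Pi Pj Pk :
  0 < b -> b < a -> 0 < j -> j ^ 4 * (a ^ 2 - b ^ 2) ^ 2 + 2 * j ^ 2 * (a ^ 2 + b ^ 2) = 3 ->
  on_ellipse a b Pi -> on_ellipse a b Pj -> on_ellipse a b Pk ->
  Pi <> Pj -> Pi <> Pk -> Pj <> Pk ->
  ellipse_form a b Pi Pj - 1 = - j * edist Pi Pj ->
  ellipse_form a b Pi Pk - 1 = - j * edist Pi Pk ->
  ellipse_form a b Pj Pk - 1 = - j * edist Pj Pk ->
  let m := j * cfoc a b in
  let ui := vertex_param a j Pi in let uj := vertex_param a j Pj in let uk := vertex_param a j Pk in
  side_den m ui <> 0 /\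
  edist Pj Pk = 2 * j * a ^ 2 * side_num m ui / ((1 + m ^ 2) * side_den m ui) /\
  side_den m ui * (uj + uk) = - (1 - m ^ 2) ^ 2 * ui /\
  side_den m ui * (uj * uk) = (1 + m ^ 2) * (ui ^ 2 - 1).
Proof.
  intros hb hab hj hq ei ej ek dij dik djk hij hik hjk m ui uj uk.
  assert (ha : 0 < a) by lra.
  destruct (caustic_relations a b j hb hab hj hq) as (hm1 & hm2 & hT). fold m in hm1, hm2, hT.
  assert (hs : 0 < j * a) by nra.
  assert (hX : forall p, fst p / a = j * a * vertex_param a j p)
    by (intro p; unfold vertex_param; field; lra).
  destruct (polar_parametrization m (j * a) (fst Pi / a) (snd Pi / b) (fst Pj / a) (snd Pj / b)
              (fst Pk / a) (snd Pk / b) ui)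
    as (hden & hside & hsum & hprod);
    try apply ellipse_unit_circle; try apply unit_coords_neq;
    try apply (periodic_chord_conjugate a b j); try assumption; try nra; try apply hX.
  assert (hu : forall p, fst p / a / (j * a) = vertex_param a j p)
    by (intro p; rewrite hX; field; lra).
  rewrite !hu in hsum, hprod.
  repeat split; try assumption.
  rewrite <- ellipse_form_unit in hside by assumption.
  apply (Rmult_eq_reg_l j); [| lra].
  replace (j * edist Pj Pk) with (1 - ellipse_form a b Pj Pk) by lra.
  rewrite hside. field. split; [exact hden | pose proof (one_plus_sq_pos m); lra].
Qed.

Lemma focal_distance a b p : 0 < b -> b < a -> on_ellipse a b p ->
  0 < a + cfoc a b * fst p / a /\ edist p (f1 a b) = a + cfoc a b * fst p / a.
Proof.
  intros hb hab hp. unfold on_ellipse in hp.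
  pose proof (cfoc_sq a b hb hab) as hc2. pose proof (cfoc_pos a b hb hab) as hc.
  set (c := cfoc a b) in *. destruct p as [x y]; cbn [fst snd] in *.
  assert (ha : 0 < a) by lra.
  assert (hy : y ^ 2 = b ^ 2 * (1 - x ^ 2 / a ^ 2)) by (rewrite <- hp; field; lra).
  assert (hx : x ^ 2 <= a ^ 2).
  { assert (0 <= y ^ 2 / b ^ 2) by (apply Rle_mult_inv_pos; [apply pow2_ge_0 | nra]).
    replace (x ^ 2) with (a ^ 2 * (x ^ 2 / a ^ 2)) by (field; lra). nra. }
  assert (hpos : 0 < a + c * x / a).
  { replace (a + c * x / a) with ((a * a + c * x) / a) by (field; lra).
    assert (hca : c < a) by nra.
    assert (hcx : (c * x) ^ 2 < (a * a) ^ 2).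
    { assert (0 <= c ^ 2 * (a ^ 2 - x ^ 2)) by (apply Rmult_le_pos; nra).
      assert (0 < a ^ 2 * b ^ 2) by (apply Rmult_lt_0_compat; nra). nra. }
    apply Rdiv_lt_0_compat; [nra | exact ha]. }
  split; [exact hpos |].
  apply edist_eq; [lra |]. unfold f1. cbn [fst snd]. fold c.
  replace ((x - - c) ^ 2 + (y - 0) ^ 2) with ((x + c) ^ 2 + y ^ 2) by ring.
  rewrite hy. replace (b ^ 2) with (a ^ 2 - c ^ 2) by lra. field. lra.
Qed.

Lemma inversion_distance a b rho P P' : 0 < edist P (f1 a b) -> 0 < edist P' (f1 a b) ->
  edist (focus_inv a b rho P) (focus_inv a b rho P') =
  rho ^ 2 * edist P P' / (edist P (f1 a b) * edist P' (f1 a b)).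
Proof.
  intros hd hd'.
  apply edist_eq.
  - apply Rmult_le_pos; [apply Rmult_le_pos; [apply pow2_ge_0 | apply edist_nonneg] |].
    apply Rlt_le, Rinv_0_lt_compat, Rmult_lt_0_compat; assumption.
  - unfold focus_inv. cbn [fst snd].
    pose proof (edist_sq P (f1 a b)) as e. pose proof (edist_sq P' (f1 a b)) as e'.
    pose proof (edist_sq P P') as e''.
    set (d := edist P (f1 a b)) in *. set (d' := edist P' (f1 a b)) in *.
    set (vx := fst P - fst (f1 a b)) in *. set (vy := snd P - snd (f1 a b)) in *.
    set (wx := fst P' - fst (f1 a b)) in *. set (wy := snd P' - snd (f1 a b)) in *.
    replace (fst P - fst P') with (vx - wx) in e'' by (unfold vx, wx; ring).
    replace (snd P - snd P') with (vy - wy) in e'' by (unfold vy, wy; ring).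
    transitivity ((rho / d) ^ 4 * (vx ^ 2 + vy ^ 2) + (rho / d') ^ 4 * (wx ^ 2 + wy ^ 2)
                  - 2 * (rho / d) ^ 2 * (rho / d') ^ 2 * (vx * wx + vy * wy)); [ring |].
    replace ((rho ^ 2 * edist P P' / (d * d')) ^ 2) with
      (rho ^ 4 * edist P P' ^ 2 / (d ^ 2 * d' ^ 2)) by (field; lra).
    rewrite e''.
    replace ((vx - wx) ^ 2 + (vy - wy) ^ 2) with
      ((vx ^ 2 + vy ^ 2) + (wx ^ 2 + wy ^ 2) - 2 * (vx * wx + vy * wy)) by ring.
    rewrite <- e, <- e'. field. split; lra.
Qed.

Lemma inversion_power a b rho p : 0 < b -> 0 < edist p (f1 a b) ->
  let Q := focus_inv a b rho p in let d := edist p (f1 a b) in let c := cfoc a b in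
  (fst Q - fst (C9dag a b rho)) ^ 2 + (snd Q - snd (C9dag a b rho)) ^ 2
  = rho ^ 4 * (1 / d ^ 2 + c * (fst p + c) / (b ^ 2 * d ^ 2) + c ^ 2 / (4 * b ^ 4)).
Proof.
  intros hb hd Q d c.
  assert (hd' : 0 < d) by exact hd.
  pose proof (edist_sq p (f1 a b)) as e. fold d in e. unfold f1 in e. cbn [fst snd] in e. fold c in e.
  unfold Q, focus_inv, C9dag. fold d. unfold f1. cbn [fst snd]. fold c.
  destruct p as [x y]; cbn [fst snd] in *.
  transitivity (rho ^ 4 * (((x + c) ^ 2 + y ^ 2) / d ^ 4 + c * (x + c) / (b ^ 2 * d ^ 2)
                           + c ^ 2 / (4 * b ^ 4))); [field; split; lra |].
  replace ((x + c) ^ 2 + y ^ 2) with (d ^ 2) by (rewrite e; ring). field. split; lra.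
Qed.

Definition inv_side (m u : R) : R := side_num m u * focal_factor m u / side_den m u.
Definition power_scale (m : R) : R := (1 - m ^ 2) * (3 + m ^ 2) ^ 2.
Definition power_excess (m u : R) : R :=
  power_scale m + m * ((3 - m ^ 2) * (1 + m ^ 2) * u + 4 * m) * (3 + m ^ 2)
  + m ^ 2 * (3 - m ^ 2) * (1 - m ^ 2) * focal_factor m u ^ 2.

Lemma delta_caustic a b j :
  0 < b -> b < a -> j ^ 4 * (a ^ 2 - b ^ 2) ^ 2 + 2 * j ^ 2 * (a ^ 2 + b ^ 2) = 3 ->
  delta a b = (j ^ 2 * (a ^ 2 - b ^ 2) ^ 2 + a ^ 2 + b ^ 2) / 2.
Proof.
  intros hb hab hq. unfold delta.
  assert (0 <= j ^ 2 * (a ^ 2 - b ^ 2) ^ 2) by (apply Rmult_le_pos; apply pow2_ge_0).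
  apply sqrt_lem_1; [nra | nra |].
  transitivity (a ^ 4 - a ^ 2 * b ^ 2 + b ^ 4
                + (a ^ 2 - b ^ 2) ^ 2 / 4 * (j ^ 4 * (a ^ 2 - b ^ 2) ^ 2 + 2 * j ^ 2 * (a ^ 2 + b ^ 2) - 3));
    [field | rewrite hq; ring].
Qed.

Lemma power_identity A2 B2 c j m u dl :
  0 < j -> A2 = (3 - m ^ 2) * (1 + m ^ 2) / (4 * j ^ 2) -> c = m / j -> B2 = A2 - c ^ 2 ->
  dl = (j ^ 2 * c ^ 4 + A2 + B2) / 2 ->
  focal_factor m u <> 0 -> 1 - m ^ 2 <> 0 -> 3 - m ^ 2 <> 0 ->
  1 / (A2 * focal_factor m u ^ 2) + c * (A2 * j * u + c) / (B2 * (A2 * focal_factor m u ^ 2))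
  + c ^ 2 / (4 * B2 ^ 2)
  = (2 * A2 - B2 - dl) ^ 2 / (4 * A2 * B2 ^ 2)
    + power_excess m u / (power_scale m * A2 * focal_factor m u ^ 2).
Proof.
  intros hj hA hc hB hd hr h1 h3.
  assert (h3' : 3 + m ^ 2 <> 0) by (pose proof (pow2_ge_0 m); lra).
  pose proof (one_plus_sq_pos m).
  subst dl B2 A2 c. unfold power_excess, power_scale, focal_factor in *.
  field. repeat split; try lra; nra.
Qed.

Lemma periodic_focal a b j p : 0 < b -> b < a -> 0 < j -> on_ellipse a b p ->
  let m := j * cfoc a b in let u := vertex_param a j p in
  0 < focal_factor m u /\ edist p (f1 a b) = a * focal_factor m u.
Proof.
  intros hb hab hj hp m u.
  destruct (focal_distance a b p hb hab hp) as [hpos hd].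
  assert (E : a + cfoc a b * fst p / a = a * focal_factor m u)
    by (unfold focal_factor, m, u, vertex_param; field; lra).
  rewrite E in hpos, hd. split; [nra | exact hd].
Qed.

Lemma periodic_power a b j rho p :
  0 < b -> b < a -> 0 < j -> j ^ 4 * (a ^ 2 - b ^ 2) ^ 2 + 2 * j ^ 2 * (a ^ 2 + b ^ 2) = 3 ->
  on_ellipse a b p ->
  let m := j * cfoc a b in let u := vertex_param a j p in let Q := focus_inv a b rho p in
  (fst Q - fst (C9dag a b rho)) ^ 2 + (snd Q - snd (C9dag a b rho)) ^ 2
  = R9dag a b rho ^ 2 + rho ^ 4 / (power_scale m * a ^ 2) * power_excess m u / focal_factor m u ^ 2.
Proof.
  intros hb hab hj hq hp m u Q.
  destruct (caustic_relations a b j hb hab hj hq) as (hm1 & _ & hT). fold m in hm1, hT.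
  destruct (periodic_focal a b j p hb hab hj hp) as [hr hd]. fold m u in hr, hd.
  pose proof (cfoc_pos a b hb hab) as hc. pose proof (cfoc_sq a b hb hab) as hc2.
  assert (hdpos : 0 < edist p (f1 a b)) by (rewrite hd; nra).
  pose proof (inversion_power a b rho p hb hdpos) as P. cbv zeta in P. fold Q in P.
  rewrite P, hd. unfold R9dag.
  replace (fst p) with (a ^ 2 * j * u) by (unfold u, vertex_param; field; lra).
  rewrite (delta_caustic a b j hb hab hq).
  assert (hm1' : 1 - m ^ 2 <> 0) by lra. assert (hm3 : 3 - m ^ 2 <> 0) by lra.
  assert (hK : power_scale m <> 0).
  { unfold power_scale. apply Rmult_integral_contrapositive. split; [lra |]. apply pow_nonzero. nra. }
  transitivity (rho ^ 4 * (1 / (a ^ 2 * focal_factor m u ^ 2)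
      + cfoc a b * (a ^ 2 * j * u + cfoc a b) / (b ^ 2 * (a ^ 2 * focal_factor m u ^ 2))
      + cfoc a b ^ 2 / (4 * (b ^ 2) ^ 2))); [field; repeat split; nra |].
  rewrite (power_identity (a ^ 2) (b ^ 2) (cfoc a b) j m u
             ((j ^ 2 * (a ^ 2 - b ^ 2) ^ 2 + a ^ 2 + b ^ 2) / 2) hj).
  2: { rewrite <- hT. field. lra. }
  2: { unfold m. field. lra. }
  2: { rewrite hc2. ring. }
  2: { replace (cfoc a b ^ 4) with ((cfoc a b ^ 2) ^ 2) by ring. rewrite hc2. reflexivity. }
  all: try lra.
  field. repeat split; nra.
Qed.

Lemma mittenpunkt_weight_pos la lb lc :
  0 < la -> 0 < lb -> 0 < lc -> la <= lb + lc -> lb <= lc + la -> lc <= la + lb ->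
  let s := (la + lb + lc) / 2 in 0 < la * (s - la) + lb * (s - lb) + lc * (s - lc).
Proof.
  intros h1 h2 h3 t1 t2 t3 s.
  assert (0 <= la * (s - la)) by (apply Rmult_le_pos; unfold s; lra).
  assert (0 <= lb * (s - lb)) by (apply Rmult_le_pos; unfold s; lra).
  assert (0 <= lc * (s - lc)) by (apply Rmult_le_pos; unfold s; lra).
  (* At most one of the factors [s - l] vanishes. *)
  destruct (Rlt_or_le 0 (s - la)); [nra |].
  destruct (Rlt_or_le 0 (s - lb)); [nra |].
  assert (0 < s - lc) by (unfold s in *; lra). nra.
Qed.

Lemma weighted_centroid_sq (A B C Z : pt) wa wb wc : wa + wb + wc <> 0 ->
  ((wa * fst A + wb * fst B + wc * fst C) / (wa + wb + wc) - fst Z) ^ 2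
  + ((wa * snd A + wb * snd B + wc * snd C) / (wa + wb + wc) - snd Z) ^ 2
  = (wa * ((fst A - fst Z) ^ 2 + (snd A - snd Z) ^ 2) + wb * ((fst B - fst Z) ^ 2 + (snd B - snd Z) ^ 2)
     + wc * ((fst C - fst Z) ^ 2 + (snd C - snd Z) ^ 2)) / (wa + wb + wc)
    - (wa * wb * ((fst A - fst B) ^ 2 + (snd A - snd B) ^ 2)
       + wb * wc * ((fst B - fst C) ^ 2 + (snd B - snd C) ^ 2)
       + wc * wa * ((fst C - fst A) ^ 2 + (snd C - snd A) ^ 2)) / (wa + wb + wc) ^ 2.
Proof. intro h. field. exact h. Qed.

Lemma mittenpunkt_on_circle (A B C Z : pt) (rad eA eB eC : R) :
  A <> B -> B <> C -> C <> A -> 0 <= rad ->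
  (fst A - fst Z) ^ 2 + (snd A - snd Z) ^ 2 = rad ^ 2 + eA ->
  (fst B - fst Z) ^ 2 + (snd B - snd Z) ^ 2 = rad ^ 2 + eB ->
  (fst C - fst Z) ^ 2 + (snd C - snd Z) ^ 2 = rad ^ 2 + eC ->
  let la := edist B C in let lb := edist C A in let lc := edist A B in
  let s := (la + lb + lc) / 2 in
  let wa := la * (s - la) in let wb := lb * (s - lb) in let wc := lc * (s - lc) in
  (wa + wb + wc) * (wa * eA + wb * eB + wc * eC)
  = wa * wb * lc ^ 2 + wb * wc * la ^ 2 + wc * wa * lb ^ 2 ->
  edist (mittenpunkt A B C) Z = rad.
Proof.
  intros hAB hBC hCA hR pA pB pC la lb lc s wa wb wc hbal.
  assert (hW : 0 < wa + wb + wc).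
  { pose proof (edist_triangle B A C). pose proof (edist_triangle C B A).
    pose proof (edist_triangle A C B).
    rewrite (edist_sym B A), (edist_sym A C), (edist_sym C B) in *.
    apply mittenpunkt_weight_pos; try apply edist_pos; try assumption; unfold la, lb, lc; lra. }
  unfold mittenpunkt. fold la lb lc s wa wb wc.
  apply edist_eq; [exact hR |]. cbn [fst snd].
  rewrite weighted_centroid_sq by lra.
  rewrite pA, pB, pC, <- (edist_sq A B), <- (edist_sq B C), <- (edist_sq C A).
  fold la lb lc.
  transitivity (rad ^ 2 + ((wa + wb + wc) * (wa * eA + wb * eB + wc * eC)
                         - (wa * wb * lc ^ 2 + wb * wc * la ^ 2 + wc * wa * lb ^ 2))
                        / (wa + wb + wc) ^ 2); [field; lra |].
  rewrite hbal. field. lra.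
Qed.

(** The Mittenpunkt balance for the inverted
    triangle is a rational identity in [m] and the parameters [u1, u2, u3],
    where [u2, u3] are the two roots of a quadratic determined by [u1]. It is
    verified in two reductions: expressions symmetric in [u2, u3] are
    rewritten through [s = u2 + u3] and [p = u2 u3] (polynomials [cert_*]),
    then [s, p] are replaced by their values in [u1] (polynomials
    [cert_*_at]); the resulting identity in [m, u1] is checked by [field].
    The polynomials were computed with a computer algebra system. *)

Definition cert_sum (m s p : R) : R :=
  m^9*s*p + m^8*s^2 - 2*m^8*p - 4*m^7*s*p^2 - m^7*s*p + m^7*s - m^6*s^2 - 8*m^6*p^2 + 2*m^6*p + 2*m^6 - 4*m^5*s^3 + 12*m^5*s*p^2 + 7*m^5*s*p + 3*m^5*s - 9*m^4*s^2 + 24*m^4*p^2 + 18*m^4*p + 6*m^4 - 4*m^3*s^3 + 9*m^3*s*p + 3*m^3*s - 7*m^2*s^2 + 14*m^2*p + 6*m^2 + m*s + 2.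
Definition cert_den (m s p : R) : R :=
  m^8*p^2 + m^6*s^2 - 6*m^6*p^2 - 2*m^6*p - 2*m^4*s^2 + 9*m^4*p^2 + 4*m^4*p + m^4 - 3*m^2*s^2 + 6*m^2*p + 2*m^2 + 1.
Definition cert_prod (m s p : R) : R :=
  m^10*p + m^9*s - 4*m^8*s^2*p + 8*m^8*p^2 + 4*m^8*p + m^8 - 4*m^7*s^3 + 8*m^7*s*p + 4*m^7*s - 8*m^6*s^2*p - 4*m^6*s^2 + 16*m^6*p^3 + 16*m^6*p^2 + 14*m^6*p + 4*m^6 - 8*m^5*s^3 + 16*m^5*s*p^2 + 16*m^5*s*p + 6*m^5*s - 4*m^4*s^2*p - 8*m^4*s^2 + 24*m^4*p^2 + 20*m^4*p + 6*m^4 - 4*m^3*s^3 + 8*m^3*s*p + 4*m^3*s - 4*m^2*s^2 + 9*m^2*p + 4*m^2 + m*s + 1.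
Definition cert_pow1 (m s p : R) : R :=
  m^19*s*p^3 + 2*m^18*s^2*p^2 + m^17*s^3*p - 4*m^17*s*p^4 - 5*m^17*s*p^3 + 3*m^17*s*p^2 - 8*m^16*s^2*p^3 - 15*m^16*s^2*p^2 + 4*m^16*s^2*p + 10*m^16*p^3 - 8*m^15*s^3*p^2 - 15*m^15*s^3*p + m^15*s^3 + 28*m^15*s*p^4 + 6*m^15*s*p^3 + 9*m^15*s*p^2 + 3*m^15*s*p - 8*m^14*s^4*p - 5*m^14*s^4 + 56*m^14*s^2*p^3 + 37*m^14*s^2*p^2 - 12*m^14*s^2*p + 2*m^14*s^2 + 40*m^14*p^4 - 34*m^14*p^3 + 10*m^14*p^2 - 4*m^13*s^5 + 40*m^13*s^3*p^2 + 40*m^13*s^3*p - 11*m^13*s^3 - 60*m^13*s*p^4 + 114*m^13*s*p^3 - 50*m^13*s*p^2 - 7*m^13*s*p + m^13*s + 24*m^12*s^4*p + 9*m^12*s^4 - 120*m^12*s^2*p^3 + 94*m^12*s^2*p^2 + 16*m^12*s^2*p - 17*m^12*s^2 - 216*m^12*p^4 - 4*m^12*p^3 - 74*m^12*p^2 - 10*m^12*p + 12*m^11*s^5 - 56*m^11*s^3*p^2 + 86*m^11*s^3*p + 24*m^11*s^3 + 36*m^11*s*p^4 - 567*m^11*s*p^3 - 106*m^11*s*p^2 - 78*m^11*s*p - 21*m^11*s + 8*m^10*s^4*p + 66*m^10*s^4 + 72*m^10*s^2*p^3 - 448*m^10*s^2*p^2 - 48*m^10*s^2*p - m^10*s^2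 + 216*m^10*p^4 - 268*m^10*p^3 - 68*m^10*p^2 - 46*m^10*p - 10*m^10 + 4*m^9*s^5 + 24*m^9*s^3*p^2 - 171*m^9*s^3*p + 94*m^9*s^3 + 531*m^9*s*p^3 - 189*m^9*s*p^2 - 74*m^9*s*p - 18*m^9*s - 24*m^8*s^4*p - 74*m^8*s^4 + 177*m^8*s^2*p^2 - 20*m^8*s^2*p + 98*m^8*s^2 + 216*m^8*p^4 + 762*m^8*p^3 + 228*m^8*p^2 + 36*m^8*p - 6*m^8 - 12*m^7*s^5 - 327*m^7*s^3*p - 155*m^7*s^3 + 432*m^7*s*p^3 + 1185*m^7*s*p^2 + 555*m^7*s*p + 118*m^7*s - 189*m^6*s^4 + 153*m^6*s^2*p^2 + 60*m^6*s^2*p + 44*m^6*s^2 + 558*m^6*p^3 + 954*m^6*p^2 + 396*m^6*p + 60*m^6 - 126*m^5*s^3*p - 339*m^5*s^3 + 684*m^5*s*p^2 + 849*m^5*s*p + 237*m^5*s - 63*m^4*s^4 - 81*m^4*s^2 + 486*m^4*p^2 + 486*m^4*p + 116*m^4 - 126*m^3*s^3 + 288*m^3*s*p + 159*m^3*s - 45*m^2*s^2 + 162*m^2*p + 78*m^2 + 36*m*s + 18.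
Definition cert_pow2 (m s p : R) : R :=
  m^28*s^2*p^4 - 2*m^28*p^5 + 3*m^27*s^3*p^3 - 7*m^27*s*p^4 + 3*m^26*s^4*p^2 - 6*m^26*s^2*p^4 - 6*m^26*s^2*p^3 - 16*m^26*p^6 + 12*m^26*p^5 + m^25*s^5*p - 23*m^25*s^3*p^3 + m^25*s^3*p^2 - 40*m^25*s*p^5 + 57*m^25*s*p^4 - 33*m^24*s^4*p^2 + 2*m^24*s^4*p + 16*m^24*s^2*p^6 - 46*m^24*s^2*p^4 + 86*m^24*s^2*p^3 + 4*m^24*s^2*p^2 - 32*m^24*p^7 + 128*m^24*p^6 - 4*m^24*p^5 + 6*m^24*p^4 + 4*m^24*p^3 - 21*m^23*s^5*p + 32*m^23*s^3*p^5 - 12*m^23*s^3*p^3 + 39*m^23*s^3*p^2 + 5*m^23*s^3*p - 48*m^23*s*p^6 + 360*m^23*s*p^5 - 80*m^23*s*p^4 + 40*m^23*s*p^3 + 6*m^23*s*p^2 - 5*m^22*s^6 + 48*m^22*s^4*p^4 + 48*m^22*s^4*p^2 - 12*m^22*s^4*p + m^22*s^4 - 160*m^22*s^2*p^6 - 96*m^22*s^2*p^5 + 474*m^22*s^2*p^4 - 248*m^22*s^2*p^3 + 46*m^22*s^2*p^2 + 6*m^22*s^2*p + 320*m^22*p^7 - 272*m^22*p^6 - 20*m^22*p^5 + 28*m^22*p^4 - 8*m^22*p^3 + 64*m^21*s^5*p^3 + 52*m^21*s^5*p - 10*m^21*s^5 - 320*m^21*s^3*p^5 - 176*m^21*s^3*p^4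 + 444*m^21*s^3*p^3 - 188*m^21*s^3*p^2 - m^21*s^3*p + 3*m^21*s^3 + 400*m^21*s*p^6 - 936*m^21*s*p^5 - 136*m^21*s*p^4 - 144*m^21*s*p^3 - 2*m^21*s*p^2 + 48*m^20*s^6*p^2 + 14*m^20*s^6 - 352*m^20*s^4*p^4 - 96*m^20*s^4*p^3 + 296*m^20*s^4*p^2 + 4*m^20*s^4*p - 13*m^20*s^4 + 576*m^20*s^2*p^6 + 288*m^20*s^2*p^5 - 1468*m^20*s^2*p^4 - 8*m^20*s^2*p^3 - 300*m^20*s^2*p^2 - 14*m^20*s^2*p + 3*m^20*s^2 - 1152*m^20*p^7 - 32*m^20*p^6 - 40*m^20*p^5 - 180*m^20*p^4 + 8*m^20*p^3 + 4*m^20*p^2 - 2*m^20*p + 32*m^19*s^7*p - 384*m^19*s^5*p^3 - 80*m^19*s^5*p^2 + 124*m^19*s^5*p + 20*m^19*s^5 + 1152*m^19*s^3*p^5 + 624*m^19*s^3*p^4 - 1070*m^19*s^3*p^3 + 156*m^19*s^3*p^2 - 100*m^19*s^3*p - 19*m^19*s^3 - 1056*m^19*s*p^6 + 40*m^19*s*p^5 - 150*m^19*s*p^4 - 48*m^19*s*p^3 - 112*m^19*s*p^2 - 8*m^19*s*p + m^19*s + 16*m^18*s^8 - 224*m^18*s^6*p^2 - 32*m^18*s^6*p + 30*m^18*s^6 + 832*m^18*s^4*p^4 - 128*m^18*s^4*p^3 - 738*m^18*s^4*p^2 + 148*m^18*s^4*p - 4*m^18*s^4 - 864*m^18*s^2*p^6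 + 1472*m^18*s^2*p^5 + 2118*m^18*s^2*p^4 + 332*m^18*s^2*p^3 + 196*m^18*s^2*p^2 - 88*m^18*s^2*p - 24*m^18*s^2 + 1728*m^18*p^7 + 272*m^18*p^6 - 428*m^18*p^5 + 204*m^18*p^4 - 56*m^18*p^3 - 40*m^18*p^2 - 4*m^18*p - 64*m^17*s^7*p + 48*m^17*s^7 + 512*m^17*s^5*p^3 - 464*m^17*s^5*p^2 - 578*m^17*s^5*p + 100*m^17*s^5 - 1728*m^17*s^3*p^5 + 1312*m^17*s^3*p^4 + 1238*m^17*s^3*p^3 + 654*m^17*s^3*p^2 + 180*m^17*s^3*p - 36*m^17*s^3 + 864*m^17*s*p^6 + 3784*m^17*s*p^5 + 1426*m^17*s*p^4 + 176*m^17*s*p^3 - 96*m^17*s*p^2 - 104*m^17*s*p - 23*m^17*s - 32*m^16*s^8 + 192*m^16*s^6*p^2 - 96*m^16*s^6*p - 42*m^16*s^6 - 672*m^16*s^4*p^4 + 1792*m^16*s^4*p^3 - 690*m^16*s^4*p^2 - 152*m^16*s^4*p + 244*m^16*s^4 + 432*m^16*s^2*p^6 - 5952*m^16*s^2*p^5 + 1374*m^16*s^2*p^4 + 2260*m^16*s^2*p^3 + 892*m^16*s^2*p^2 - 136*m^16*s^2*p - 86*m^16*s^2 - 864*m^16*p^7 + 384*m^16*p^6 + 1188*m^16*p^5 - 1032*m^16*p^4 - 720*m^16*p^3 - 280*m^16*p^2 - 68*m^16*p - 10*m^16 - 128*m^15*s^7*p - 176*m^15*s^7 + 384*m^15*s^5*p^3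 + 2208*m^15*s^5*p^2 + 42*m^15*s^5*p - 44*m^15*s^5 + 864*m^15*s^3*p^5 - 5664*m^15*s^3*p^4 + 500*m^15*s^3*p^3 - 30*m^15*s^3*p^2 + 878*m^15*s^3*p + 292*m^15*s^3 - 432*m^15*s*p^6 - 9096*m^15*s*p^5 - 2888*m^15*s*p^4 - 1760*m^15*s*p^3 - 1252*m^15*s*p^2 - 536*m^15*s*p - 96*m^15*s - 64*m^14*s^8 + 224*m^14*s^6*p^2 + 192*m^14*s^6*p - 460*m^14*s^6 + 144*m^14*s^4*p^4 - 192*m^14*s^4*p^3 + 4904*m^14*s^4*p^2 + 876*m^14*s^4*p + 310*m^14*s^4 + 3744*m^14*s^2*p^5 - 13218*m^14*s^2*p^4 - 7320*m^14*s^2*p^3 - 1888*m^14*s^2*p^2 + 260*m^14*s^2*p + 114*m^14*s^2 - 1008*m^14*p^6 - 3676*m^14*p^5 - 1580*m^14*p^4 - 1448*m^14*p^3 - 776*m^14*p^2 - 244*m^14*p - 36*m^14 + 64*m^13*s^7*p - 160*m^13*s^7 - 576*m^13*s^5*p^3 + 672*m^13*s^5*p^2 + 1636*m^13*s^5*p - 672*m^13*s^5 + 2448*m^13*s^3*p^4 - 4356*m^13*s^3*p^3 + 148*m^13*s^3*p^2 + 746*m^13*s^3*p + 554*m^13*s^3 + 1296*m^13*s*p^6 + 6408*m^13*s*p^5 - 6896*m^13*s*p^4 - 4016*m^13*s*p^3 - 932*m^13*s*p^2 - 40*m^13*s*p + 8*m^13*s + 32*m^12*s^8 - 240*m^12*s^6*p^2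 + 832*m^12*s^6*p + 138*m^12*s^6 - 3744*m^12*s^4*p^3 - 2448*m^12*s^4*p^2 - 804*m^12*s^4*p - 1038*m^12*s^4 + 2592*m^12*s^2*p^5 + 11403*m^12*s^2*p^4 - 1000*m^12*s^2*p^3 + 284*m^12*s^2*p^2 + 1804*m^12*s^2*p + 656*m^12*s^2 + 2592*m^12*p^6 + 7050*m^12*p^5 + 4564*m^12*p^4 + 3128*m^12*p^3 + 1168*m^12*p^2 + 216*m^12*p + 12*m^12 + 96*m^11*s^7*p + 544*m^11*s^7 - 2640*m^11*s^5*p^2 + 780*m^11*s^5*p - 228*m^11*s^5 + 432*m^11*s^3*p^4 - 5565*m^11*s^3*p^3 - 9396*m^11*s^3*p^2 - 4868*m^11*s^3*p - 906*m^11*s^3 + 9720*m^11*s*p^5 + 27189*m^11*s*p^4 + 19888*m^11*s*p^3 + 11392*m^11*s*p^2 + 4120*m^11*s*p + 650*m^11*s + 48*m^10*s^8 + 864*m^10*s^6*p + 1970*m^10*s^6 - 1728*m^10*s^4*p^3 - 11385*m^10*s^4*p^2 - 7332*m^10*s^4*p - 2692*m^10*s^4 + 7560*m^10*s^2*p^4 + 13386*m^10*s^2*p^3 + 5724*m^10*s^2*p^2 + 2280*m^10*s^2*p + 682*m^10*s^2 + 8208*m^10*p^5 + 18756*m^10*p^4 + 16088*m^10*p^3 + 8136*m^10*p^2 + 2260*m^10*p + 268*m^10 + 624*m^9*s^7 - 720*m^9*s^5*p^2 - 87*m^9*s^5*p + 1596*m^9*s^5 - 3447*m^9*s^3*p^3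 - 15975*m^9*s^3*p^2 - 12588*m^9*s^3*p - 3380*m^9*s^3 + 17325*m^9*s*p^4 + 34704*m^9*s*p^3 + 24816*m^9*s*p^2 + 9352*m^9*s*p + 1506*m^9*s + 288*m^8*s^6*p + 1938*m^8*s^6 - 4293*m^8*s^4*p^2 - 7242*m^8*s^4*p - 2220*m^8*s^4 + 4806*m^8*s^2*p^3 + 3216*m^8*s^2*p^2 - 72*m^8*s^2*p - 138*m^8*s^2 + 9954*m^8*p^4 + 18060*m^8*p^3 + 12632*m^8*p^2 + 4324*m^8*p + 600*m^8 + 144*m^7*s^7 + 99*m^7*s^5*p + 1788*m^7*s^5 - 6129*m^7*s^3*p^2 - 10251*m^7*s^3*p - 3660*m^7*s^3 + 12600*m^7*s*p^3 + 18126*m^7*s*p^2 + 9016*m^7*s*p + 1672*m^7*s + 513*m^6*s^6 - 1872*m^6*s^4*p - 687*m^6*s^4 + 18*m^6*s^2*p^2 - 1434*m^6*s^2*p - 682*m^6*s^2 + 5904*m^6*p^3 + 8040*m^6*p^2 + 3844*m^6*p + 660*m^6 + 522*m^5*s^5 - 2673*m^5*s^3*p - 1749*m^5*s^3 + 4374*m^5*s*p^2 + 4104*m^5*s*p + 1024*m^5*s - 45*m^4*s^4 - 558*m^4*s^2*p - 435*m^4*s^2 + 1836*m^4*p^2 + 1674*m^4*p + 404*m^4 - 315*m^3*s^3 + 720*m^3*s*p + 333*m^3*s - 90*m^2*s^2 + 288*m^2*p + 132*m^2 + 45*m*s + 18.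


Definition cert_sum_at (m u : R) : R :=
  (2 - 4*m^2 - 2*m^4 + 8*m^6 - 2*m^8 - 4*m^10 + 2*m^12) + (- m + 7*m^3 - 13*m^5 + 3*m^7 + 13*m^9 - 11*m^11 + m^13 + m^15)*u + (- 5*m^2 + 15*m^4 - 9*m^6 - 13*m^8 + 17*m^10 - 3*m^12 - 3*m^14 + m^16)*u^2 + (- 2*m^3 + 4*m^5 + 2*m^7 - 8*m^9 + 2*m^11 + 4*m^13 - 2*m^15)*u^3.
Definition cert_prod_at (m u : R) : R :=
  (1 - 2*m^2 - 2*m^4 + 6*m^6 - 6*m^10 + 2*m^12 + 2*m^14 - m^16) + (- m + 4*m^3 - 4*m^5 - 4*m^7 + 10*m^9 - 4*m^11 - 4*m^13 + 4*m^15 - m^17)*u + (- 4*m^2 + 10*m^4 + 2*m^6 - 22*m^8 + 10*m^10 + 14*m^12 - 10*m^14 - 2*m^16 + 2*m^18)*u^2 + (2*m^3 - 8*m^5 + 8*m^7 + 8*m^9 - 20*m^11 + 8*m^13 + 8*m^15 - 8*m^17 + 2*m^19)*u^3 + (5*m^4 - 14*m^6 + 2*m^8 + 26*m^10 - 20*m^12 - 10*m^14 + 14*m^16 - 2*m^18 - m^20)*u^4 + (- m^5 + 4*m^7 - 4*m^9 - 4*m^11 + 10*m^13 - 4*m^15 - 4*m^17 + 4*m^19 - m^21)*u^5 + (- 2*m^6 + 6*m^8 - 2*m^10 - 10*m^12 + 10*m^14 + 2*m^16 - 6*m^18 + 2*m^20)*u^6.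
Definition cert_pow1_at (m u : R) : R :=
  (18 - 12*m^2 - 112*m^4 + 92*m^6 + 258*m^8 - 248*m^10 - 272*m^12 + 312*m^14 + 118*m^16 - 188*m^18 + 44*m^22 - 10*m^24) + (- 36*m + 93*m^3 + 129*m^5 - 574*m^7 + 198*m^9 + 979*m^11 - 977*m^13 - 420*m^15 + 992*m^17 - 269*m^19 - 273*m^21 + 194*m^23 - 34*m^25 - 3*m^27 + m^29)*u + (- 99*m^2 + 117*m^4 + 560*m^6 - 682*m^8 - 1557*m^10 + 2631*m^12 + 754*m^14 - 3420*m^16 + 1427*m^18 + 1075*m^20 - 1092*m^22 + 294*m^24 + 5*m^26 - 15*m^28 + 2*m^30)*u^2 + (162*m^3 - 591*m^5 + 53*m^7 + 2418*m^9 - 3000*m^11 - 1865*m^13 + 6183*m^15 - 3236*m^17 - 2230*m^19 + 3279*m^21 - 1277*m^23 + 18*m^25 + 108*m^27 - 23*m^29 + m^31)*u^3 + (207*m^4 - 417*m^6 - 886*m^8 + 2338*m^10 + 1405*m^12 - 7435*m^14 + 5308*m^16 + 2988*m^18 - 6055*m^20 + 2905*m^22 - 102*m^24 - 366*m^26 + 123*m^28 - 13*m^30)*u^4 + (- 180*m^5 + 846*m^7 - 880*m^9 - 2116*m^11 + 6204*m^13 - 4798*m^15 - 2112*m^17 + 6088*m^19 - 3772*m^21 + 306*m^23 + 688*m^25 - 324*m^27 + 52*m^29 - 2*m^31)*u^5 + (- 180*m^6 + 636*m^8 - 132*m^10 - 2252*m^12 + 3360*m^14 - 296*m^16 - 3144*m^18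 + 2664*m^20 - 308*m^22 - 660*m^24 + 396*m^26 - 92*m^28 + 8*m^30)*u^6 + (- 24*m^9 + 128*m^11 - 232*m^13 + 64*m^15 + 336*m^17 - 448*m^19 + 112*m^21 + 192*m^23 - 184*m^25 + 64*m^27 - 8*m^29)*u^7.
Definition cert_pow2_at (m u : R) : R :=
  (18 - 48*m^2 - 100*m^4 + 368*m^6 + 154*m^8 - 1216*m^10 + 208*m^12 + 2240*m^14 - 1148*m^16 - 2464*m^18 + 1960*m^20 + 1568*m^22 - 1820*m^24 - 448*m^26 + 976*m^28 - 64*m^30 - 278*m^32 + 80*m^34 + 28*m^36 - 16*m^38 + 2*m^40) + (- 45*m + 252*m^3 - 178*m^5 - 1452*m^7 + 2859*m^9 + 2032*m^11 - 9592*m^13 + 3088*m^15 + 14182*m^17 - 12664*m^19 - 8972*m^21 + 15768*m^23 - 402*m^25 - 9168*m^27 + 3656*m^29 + 2128*m^31 - 1753*m^33 + 92*m^35 + 238*m^37 - 76*m^39 + 7*m^41)*u + (- 126*m^2 + 285*m^4 + 1116*m^6 - 3174*m^8 - 3878*m^10 + 18077*m^12 - 5168*m^14 - 38952*m^16 + 40740*m^18 + 27162*m^20 - 64984*m^22 + 14332*m^24 + 39716*m^26 - 28798*m^28 - 4400*m^30 + 12056*m^32 - 3750*m^34 - 855*m^36 + 732*m^38 - 134*m^40 + 2*m^42 + m^44)*u^2 + (270*m^3 - 1905*m^5 + 3236*m^7 + 6398*m^9 - 25138*m^11 + 5495*m^13 + 70640*m^15 - 84216*m^17 - 53860*m^19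 + 168222*m^21 - 66536*m^23 - 107052*m^25 + 117004*m^27 - 9434*m^29 - 45200*m^31 + 25672*m^33 - 1386*m^35 - 3149*m^37 + 996*m^39 - 34*m^41 - 26*m^43 + 3*m^45)*u^3 + (423*m^4 - 1119*m^6 - 4372*m^8 + 17772*m^10 + 1393*m^12 - 84609*m^14 + 107392*m^16 + 82144*m^18 - 289098*m^20 + 156794*m^22 + 192248*m^24 - 290984*m^26 + 77298*m^28 + 103310*m^30 - 92832*m^32 + 20864*m^34 + 7283*m^36 - 4395*m^38 + 316*m^40 + 220*m^42 - 51*m^44 + 3*m^46)*u^4 + (- 468*m^5 + 4593*m^7 - 13404*m^9 + 270*m^11 + 68552*m^13 - 102419*m^15 - 79024*m^17 + 349928*m^19 - 255224*m^21 - 231310*m^23 + 492152*m^25 - 218540*m^27 - 149824*m^29 + 208018*m^31 - 75376*m^33 - 8600*m^35 + 13420*m^37 - 2275*m^39 - 764*m^41 + 334*m^43 - 40*m^45 + m^47)*u^5 + (- 837*m^6 + 3948*m^8 + 466*m^10 - 33812*m^12 + 54295*m^14 + 70640*m^16 - 305128*m^18 + 278320*m^20 + 179078*m^22 - 559256*m^24 + 361068*m^26 + 117672*m^28 - 299338*m^30 + 152240*m^32 + 1432*m^34 - 30608*m^36 + 9983*m^38 + 652*m^40 - 1006*m^42 + 204*m^44 - 13*m^46)*u^6 + (- 45*m^7 - 2400*m^9 + 16366*m^11 - 31176*m^13 - 26269*m^15 + 187840*m^17 - 246520*m^19 - 34784*m^21 + 416454*m^23 - 391296*m^25 - 16076*m^27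 + 282960*m^29 - 195330*m^31 + 13120*m^33 + 48584*m^35 - 25568*m^37 + 3335*m^39 + 1248*m^41 - 498*m^43 + 56*m^45 - m^47)*u^7 + (630*m^8 - 4926*m^10 + 12642*m^12 - 138*m^14 - 63272*m^16 + 121736*m^18 - 36440*m^20 - 174664*m^22 + 249556*m^24 - 56260*m^26 - 165732*m^28 + 169908*m^30 - 35208*m^32 - 45208*m^34 + 37576*m^36 - 10984*m^38 + 358*m^40 + 530*m^42 - 110*m^44 + 6*m^46)*u^8 + (612*m^9 - 3672*m^11 + 5716*m^13 + 9856*m^15 - 44208*m^17 + 42656*m^19 + 38224*m^21 - 115968*m^23 + 71416*m^25 + 50736*m^27 - 100008*m^29 + 46208*m^31 + 15248*m^33 - 27360*m^35 + 13072*m^37 - 2560*m^39 - 60*m^41 + 104*m^43 - 12*m^45)*u^9 + (216*m^10 - 1272*m^12 + 1984*m^14 + 2880*m^16 - 12896*m^18 + 10976*m^20 + 12864*m^22 - 31040*m^24 + 13840*m^26 + 17712*m^28 - 24000*m^30 + 6848*m^32 + 6048*m^34 - 5920*m^36 + 1984*m^38 - 192*m^40 - 40*m^42 + 8*m^44)*u^10.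
Definition cert_den_at (m u : R) : R :=
  (1 - 3*m^2 + 2*m^4 + 2*m^6 - 3*m^8 + m^10).

Lemma cert_den_split m u2 u3 : cert_den m (u2 + u3) (u2 * u3) = side_den m u2 * side_den m u3.
Proof. unfold cert_den, side_den. ring. Qed.

Section SymmetricReduction.
Variables m u2 u3 : R.
Hypotheses (h2 : side_den m u2 <> 0) (h3 : side_den m u3 <> 0).
Let s := u2 + u3.
Let p := u2 * u3.

Lemma sym_sum : inv_side m u2 + inv_side m u3 = cert_sum m s p / cert_den m s p.
Proof.
  unfold s, p. rewrite cert_den_split. unfold inv_side, cert_sum, side_num, focal_factor.
  unfold side_den in *. field. split; assumption.
Qed.

Lemma sym_prod : inv_side m u2 * inv_side m u3 = cert_prod m s p / cert_den m s p.
Proof.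
  unfold s, p. rewrite cert_den_split. unfold inv_side, cert_prod, side_num, focal_factor.
  unfold side_den in *. field. split; assumption.
Qed.

Lemma sym_pow1 :
  inv_side m u2 * power_excess m u2 * focal_factor m u3 ^ 2
  + inv_side m u3 * power_excess m u3 * focal_factor m u2 ^ 2 = cert_pow1 m s p / cert_den m s p.
Proof.
  unfold s, p. rewrite cert_den_split.
  unfold inv_side, cert_pow1, side_num, power_excess, power_scale, focal_factor.
  unfold side_den in *. field. split; assumption.
Qed.

Lemma sym_pow2 :
  inv_side m u2 ^ 2 * power_excess m u2 * focal_factor m u3 ^ 2
  + inv_side m u3 ^ 2 * power_excess m u3 * focal_factor m u2 ^ 2
  = cert_pow2 m s p / cert_den m s p ^ 2.
Proof.
  unfold s, p. rewrite cert_den_split.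
  unfold inv_side, cert_pow2, side_num, power_excess, power_scale, focal_factor.
  unfold side_den in *. field. split; assumption.
Qed.

End SymmetricReduction.

Section VietaEvaluation.
Variables m u : R.
Hypothesis hu : side_den m u <> 0.
Let s := - (1 - m ^ 2) ^ 2 * u / side_den m u.
Let p := (1 + m ^ 2) * (u ^ 2 - 1) / side_den m u.

Lemma vieta_sum : cert_sum m s p = cert_sum_at m u / side_den m u ^ 2.
Proof. unfold s, p, cert_sum, cert_sum_at. unfold side_den in *. field. exact hu. Qed.

Lemma vieta_prod : cert_prod m s p = cert_prod_at m u / side_den m u ^ 3.
Proof. unfold s, p, cert_prod, cert_prod_at. unfold side_den in *. field. exact hu. Qed.

Lemma vieta_pow1 : cert_pow1 m s p = cert_pow1_at m u / side_den m u ^ 4.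
Proof. unfold s, p, cert_pow1, cert_pow1_at. unfold side_den in *. field. exact hu. Qed.

Lemma vieta_pow2 : cert_pow2 m s p = cert_pow2_at m u / side_den m u ^ 6.
Proof. unfold s, p, cert_pow2, cert_pow2_at. unfold side_den in *. field. exact hu. Qed.

Lemma vieta_den : cert_den m s p = cert_den_at m u / side_den m u.
Proof. unfold s, p, cert_den, cert_den_at. unfold side_den in *. field. exact hu. Qed.

End VietaEvaluation.

Definition balance_defect (m mu1 q1 r1 s1 s2 s3 s4 r23 : R) : R :=
  (1 + m ^ 2) * (mu1 * (s1 - mu1) + (mu1 + s1) * s1 - 2 * (s1 ^ 2 - 2 * s2))
    * (mu1 * (s1 - mu1) * q1 * r23 ^ 2 + r1 ^ 2 * ((mu1 + s1) * s3 - 2 * s4))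
  - (3 - m ^ 2) * power_scale m
    * (s2 * ((mu1 + s1) ^ 2 - 2 * (mu1 + s1) * s1 + 4 * s2) * mu1 ^ 2
       + mu1 * (s1 - mu1) * s2 * ((mu1 + s1) * s1 - 4 * s2)).

Lemma balance_defect_eq m mu1 mu2 mu3 q1 q2 q3 r1 r2 r3 :
  let S := mu1 + mu2 + mu3 in
  let w1 := mu1 * (S - 2 * mu1) in let w2 := mu2 * (S - 2 * mu2) in let w3 := mu3 * (S - 2 * mu3) in
  (1 + m ^ 2) * (w1 + w2 + w3)
    * (w1 * q1 * (r2 * r3) ^ 2 + w2 * q2 * (r1 * r3) ^ 2 + w3 * q3 * (r1 * r2) ^ 2)
  - (3 - m ^ 2) * power_scale m * (w1 * w2 * mu3 ^ 2 + w2 * w3 * mu1 ^ 2 + w3 * w1 * mu2 ^ 2)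
  = balance_defect m mu1 q1 r1 (mu2 + mu3) (mu2 * mu3)
      (mu2 * q2 * r3 ^ 2 + mu3 * q3 * r2 ^ 2) (mu2 ^ 2 * q2 * r3 ^ 2 + mu3 ^ 2 * q3 * r2 ^ 2) (r2 * r3).
Proof. cbv zeta. unfold balance_defect. ring. Qed.

Lemma balance_core m u1 u2 u3 :
  side_den m u1 <> 0 -> side_den m u2 <> 0 -> side_den m u3 <> 0 -> 1 - m ^ 2 <> 0 ->
  side_den m u1 * (u2 + u3) = - (1 - m ^ 2) ^ 2 * u1 ->
  side_den m u1 * (u2 * u3) = (1 + m ^ 2) * (u1 ^ 2 - 1) ->
  let mu1 := inv_side m u1 in let mu2 := inv_side m u2 in let mu3 := inv_side m u3 in
  let r1 := focal_factor m u1 in let r2 := focal_factor m u2 in let r3 := focal_factor m u3 in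
  let S := mu1 + mu2 + mu3 in
  let w1 := mu1 * (S - 2 * mu1) in let w2 := mu2 * (S - 2 * mu2) in let w3 := mu3 * (S - 2 * mu3) in
  (1 + m ^ 2) * (w1 + w2 + w3)
    * (w1 * power_excess m u1 * (r2 * r3) ^ 2 + w2 * power_excess m u2 * (r1 * r3) ^ 2
       + w3 * power_excess m u3 * (r1 * r2) ^ 2)
  = (3 - m ^ 2) * power_scale m * (w1 * w2 * mu3 ^ 2 + w2 * w3 * mu1 ^ 2 + w3 * w1 * mu2 ^ 2).
Proof.
  intros h1 h2 h3 hm hs hp mu1 mu2 mu3 r1 r2 r3 S w1 w2 w3.
  apply Rminus_diag_uniq.
  rewrite (balance_defect_eq m mu1 mu2 mu3). unfold mu2, mu3, r2, r3.
  rewrite (sym_sum m u2 u3 h2 h3), (sym_prod m u2 u3 h2 h3), (sym_pow1 m u2 u3 h2 h3),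
    (sym_pow2 m u2 u3 h2 h3).
  assert (hr23 : focal_factor m u2 * focal_factor m u3 = 1 + m * (u2 + u3) + m ^ 2 * (u2 * u3))
    by (unfold focal_factor; ring).
  assert (hden : cert_den m (u2 + u3) (u2 * u3) <> 0)
    by (rewrite cert_den_split; apply Rmult_integral_contrapositive; split; assumption).
  replace (u2 + u3) with (- (1 - m ^ 2) ^ 2 * u1 / side_den m u1) in *
    by (apply (Rmult_eq_reg_l (side_den m u1)); [rewrite hs; field |]; assumption).
  replace (u2 * u3) with ((1 + m ^ 2) * (u1 ^ 2 - 1) / side_den m u1) in *
    by (apply (Rmult_eq_reg_l (side_den m u1)); [rewrite hp; field |]; assumption).
  rewrite hr23, vieta_sum, vieta_prod, vieta_pow1, vieta_pow2, vieta_den by exact h1.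
  rewrite vieta_den in hden by exact h1.
  assert (hK : cert_den_at m u1 <> 0) by (intro hz; apply hden; rewrite hz; field; exact h1).
  unfold balance_defect, mu1, r1, inv_side, power_excess, power_scale, focal_factor, side_num,
    cert_sum_at, cert_prod_at, cert_pow1_at, cert_pow2_at.
  unfold cert_den_at, side_den in *.
  field. split; assumption.
Qed.

Lemma inverted_balance lam K0 m u1 u2 u3 :
  focal_factor m u1 <> 0 -> focal_factor m u2 <> 0 -> focal_factor m u3 <> 0 ->
  side_den m u1 <> 0 -> side_den m u2 <> 0 -> side_den m u3 <> 0 -> 1 - m ^ 2 <> 0 ->
  side_den m u1 * (u2 + u3) = - (1 - m ^ 2) ^ 2 * u1 ->
  side_den m u1 * (u2 * u3) = (1 + m ^ 2) * (u1 ^ 2 - 1) ->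
  lam ^ 2 * (1 + m ^ 2) * (focal_factor m u1 * focal_factor m u2 * focal_factor m u3) ^ 2
  = K0 * (3 - m ^ 2) * power_scale m ->
  let la := lam * inv_side m u1 in let lb := lam * inv_side m u2 in let lc := lam * inv_side m u3 in
  let eA := K0 * power_excess m u1 / focal_factor m u1 ^ 2 in
  let eB := K0 * power_excess m u2 / focal_factor m u2 ^ 2 in
  let eC := K0 * power_excess m u3 / focal_factor m u3 ^ 2 in
  let s := (la + lb + lc) / 2 in
  let wa := la * (s - la) in let wb := lb * (s - lb) in let wc := lc * (s - lc) in
  (wa + wb + wc) * (wa * eA + wb * eB + wc * eC)
  = wa * wb * lc ^ 2 + wb * wc * la ^ 2 + wc * wa * lb ^ 2.
Proof.
  intros r1 r2 r3 n1 n2 n3 hm hs hp hscale.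
  pose proof (balance_core m u1 u2 u3 n1 n2 n3 hm hs hp) as core. cbv zeta in *.
  pose proof (one_plus_sq_pos m).
  set (mu1 := inv_side m u1) in *. set (mu2 := inv_side m u2) in *. set (mu3 := inv_side m u3) in *.
  set (q1 := power_excess m u1) in *. set (q2 := power_excess m u2) in *.
  set (q3 := power_excess m u3) in *.
  set (fr1 := focal_factor m u1) in *. set (fr2 := focal_factor m u2) in *.
  set (fr3 := focal_factor m u3) in *.
  set (S := mu1 + mu2 + mu3) in *.
  set (w1 := mu1 * (S - 2 * mu1)) in *. set (w2 := mu2 * (S - 2 * mu2)) in *.
  set (w3 := mu3 * (S - 2 * mu3)) in *.
  set (CL := (1 + m ^ 2) * (w1 + w2 + w3)
               * (w1 * q1 * (fr2 * fr3) ^ 2 + w2 * q2 * (fr1 * fr3) ^ 2 + w3 * q3 * (fr1 * fr2) ^ 2)) in *.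
  set (CR := (3 - m ^ 2) * power_scale m * (w1 * w2 * mu3 ^ 2 + w2 * w3 * mu1 ^ 2 + w3 * w1 * mu2 ^ 2)) in *.
  (* The Mittenpunkt weights are [lam^2 / 2] times the normalized weights [w_i]. *)
  apply Rminus_diag_uniq.
  transitivity (lam ^ 4 * K0 / (4 * (1 + m ^ 2) * (fr1 * fr2 * fr3) ^ 2) * (CL - CR)
                + lam ^ 4 / 4 * (w1 * w2 * mu3 ^ 2 + w2 * w3 * mu1 ^ 2 + w3 * w1 * mu2 ^ 2)
                  * (K0 * (3 - m ^ 2) * power_scale m / ((1 + m ^ 2) * (fr1 * fr2 * fr3) ^ 2) - lam ^ 2)).
  - unfold CL, CR, w1, w2, w3, S. field. repeat split; lra.
  - rewrite core, <- hscale. field. repeat split; lra.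
Qed.

Lemma R9dag_nonneg a b rho : 0 < b -> b < a -> 0 <= R9dag a b rho.
Proof.
  intros hb hab. unfold R9dag, delta.
  assert (hd : sqrt (a ^ 4 - a ^ 2 * b ^ 2 + b ^ 4) <= 2 * a ^ 2 - b ^ 2).
  { rewrite <- (sqrt_pow2 (2 * a ^ 2 - b ^ 2)) by nra.
    apply sqrt_le_1_alt.
    assert (0 <= 3 * a ^ 2 * (a ^ 2 - b ^ 2)) by (apply Rmult_le_pos; nra). nra. }
  apply Rmult_le_pos; [apply Rmult_le_pos; [apply pow2_ge_0 | lra] |].
  apply Rlt_le, Rinv_0_lt_compat, Rmult_lt_0_compat; [lra | apply pow_lt; lra].
Qed.

Lemma neq_of_edist_pos p q : 0 < edist p q -> p <> q.
Proof.
  intros h e. subst q.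
  assert (edist p p = 0) by (apply edist_eq; [lra | ring]). lra.
Qed.

Lemma inverted_side a b rho j m Pj Pk ui uj uk :
  0 < a -> 0 < rho -> 0 < j ->
  0 < focal_factor m ui -> 0 < focal_factor m uj -> 0 < focal_factor m uk -> side_den m ui <> 0 ->
  edist Pj (f1 a b) = a * focal_factor m uj -> edist Pk (f1 a b) = a * focal_factor m uk ->
  edist Pj Pk = 2 * j * a ^ 2 * side_num m ui / ((1 + m ^ 2) * side_den m ui) ->
  edist (focus_inv a b rho Pj) (focus_inv a b rho Pk)
  = 2 * rho ^ 2 * j / ((1 + m ^ 2) * (focal_factor m ui * focal_factor m uj * focal_factor m uk))
    * inv_side m ui.
Proof.
  intros ha hrho hj ri rj rk hn dj dk hs.
  pose proof (one_plus_sq_pos m).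
  rewrite inversion_distance by (rewrite ?dj, ?dk; nra).
  rewrite dj, dk, hs. unfold inv_side. field. repeat split; lra.
Qed.

Lemma inversion_distinct a b rho P P' : 0 < rho -> P <> P' ->
  0 < edist P (f1 a b) -> 0 < edist P' (f1 a b) -> focus_inv a b rho P <> focus_inv a b rho P'.
Proof.
  intros hrho hPP' hd hd'. apply neq_of_edist_pos.
  rewrite inversion_distance by assumption.
  pose proof (edist_pos P P' hPP'). pose proof (pow_lt rho 2 hrho).
  apply Rdiv_lt_0_compat; [nra | nra].
Qed.

Lemma parametric_mittenpunkt (Q1 Q2 Q3 C : pt) (rad lam K0 m u1 u2 u3 : R) :
  Q1 <> Q2 -> Q2 <> Q3 -> Q3 <> Q1 -> 0 <= rad ->
  edist Q2 Q3 = lam * inv_side m u1 -> edist Q3 Q1 = lam * inv_side m u2 ->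
  edist Q1 Q2 = lam * inv_side m u3 ->
  (fst Q1 - fst C) ^ 2 + (snd Q1 - snd C) ^ 2 = rad ^ 2 + K0 * power_excess m u1 / focal_factor m u1 ^ 2 ->
  (fst Q2 - fst C) ^ 2 + (snd Q2 - snd C) ^ 2 = rad ^ 2 + K0 * power_excess m u2 / focal_factor m u2 ^ 2 ->
  (fst Q3 - fst C) ^ 2 + (snd Q3 - snd C) ^ 2 = rad ^ 2 + K0 * power_excess m u3 / focal_factor m u3 ^ 2 ->
  focal_factor m u1 <> 0 -> focal_factor m u2 <> 0 -> focal_factor m u3 <> 0 ->
  side_den m u1 <> 0 -> side_den m u2 <> 0 -> side_den m u3 <> 0 -> 1 - m ^ 2 <> 0 ->
  side_den m u1 * (u2 + u3) = - (1 - m ^ 2) ^ 2 * u1 ->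
  side_den m u1 * (u2 * u3) = (1 + m ^ 2) * (u1 ^ 2 - 1) ->
  lam ^ 2 * (1 + m ^ 2) * (focal_factor m u1 * focal_factor m u2 * focal_factor m u3) ^ 2
  = K0 * (3 - m ^ 2) * power_scale m ->
  edist (mittenpunkt Q1 Q2 Q3) C = rad.
Proof.
  intros d12 d23 d31 hrad l1 l2 l3 p1 p2 p3 r1 r2 r3 n1 n2 n3 hm hs hp hscale.
  apply (mittenpunkt_on_circle Q1 Q2 Q3 C rad _ _ _ d12 d23 d31 hrad p1 p2 p3).
  rewrite l1, l2, l3.
  exact (inverted_balance lam K0 m u1 u2 u3 r1 r2 r3 n1 n2 n3 hm hs hp hscale).
Qed.

Lemma periodic_relation_sym a b j p q :
  ellipse_form a b p q - 1 = - j * edist p q -> ellipse_form a b q p - 1 = - j * edist q p.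
Proof. rewrite ellipse_form_sym, edist_sym. exact (fun h => h). Qed.

Lemma periodic_mittenpunkt a b rho P1 P2 P3 :
  0 < b -> b < a -> 0 < rho -> three_periodic a b P1 P2 P3 ->
  edist (mittenpunkt (focus_inv a b rho P1) (focus_inv a b rho P2) (focus_inv a b rho P3))
        (C9dag a b rho) = R9dag a b rho.
Proof.
  intros hb hab hrho hP. assert (ha : 0 < a) by lra.
  destruct (periodic_caustic a b P1 P2 P3 hb hab hP) as (j & hj & hq & h12 & h13 & h23).
  destruct hP as (d12 & d23 & d13 & e1 & e2 & e3 & _).
  destruct (caustic_relations a b j hb hab hj hq) as (hm1 & _ & hT).
  pose proof (periodic_relation_sym a b j _ _ h12) as h21.
  pose proof (periodic_relation_sym a b j _ _ h13) as h31.
  pose proof (periodic_relation_sym a b j _ _ h23) as h32.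
  destruct (periodic_vertex a b j P1 P2 P3 hb hab hj hq e1 e2 e3 d12 d13 d23 h12 h13 h23)
    as (n1 & s23 & hs & hp).
  destruct (periodic_vertex a b j P2 P3 P1 hb hab hj hq e2 e3 e1 d23 (not_eq_sym d12)
              (not_eq_sym d13) h23 h21 h31) as (n2 & s31 & _ & _).
  destruct (periodic_vertex a b j P3 P1 P2 hb hab hj hq e3 e1 e2 (not_eq_sym d13)
              (not_eq_sym d23) d12 h31 h32 h12) as (n3 & s12 & _ & _).
  destruct (periodic_focal a b j P1 hb hab hj e1) as [r1 f1d].
  destruct (periodic_focal a b j P2 hb hab hj e2) as [r2 f2d].
  destruct (periodic_focal a b j P3 hb hab hj e3) as [r3 f3d].
  set (m := j * cfoc a b) in *.
  set (u1 := vertex_param a j P1) in *. set (u2 := vertex_param a j P2) in *.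
  set (u3 := vertex_param a j P3) in *.
  set (lam := 2 * rho ^ 2 * j / ((1 + m ^ 2) * (focal_factor m u1 * focal_factor m u2 * focal_factor m u3))).
  pose proof (one_plus_sq_pos m).
  assert (hd1 : 0 < edist P1 (f1 a b)) by (rewrite f1d; nra).
  assert (hd2 : 0 < edist P2 (f1 a b)) by (rewrite f2d; nra).
  assert (hd3 : 0 < edist P3 (f1 a b)) by (rewrite f3d; nra).
  apply (parametric_mittenpunkt _ _ _ _ _ lam (rho ^ 4 / (power_scale m * a ^ 2)) m u1 u2 u3);
    try (apply inversion_distinct; auto); try (apply periodic_power; assumption);
    try (apply R9dag_nonneg; assumption); try assumption; try lra.
  - unfold lam. apply (inverted_side a b rho j m P2 P3 u1 u2 u3); assumption.
  - unfold lam. replace (focal_factor m u1 * focal_factor m u2 * focal_factor m u3)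
      with (focal_factor m u2 * focal_factor m u3 * focal_factor m u1) by ring.
    apply (inverted_side a b rho j m P3 P1 u2 u3 u1); assumption.
  - unfold lam. replace (focal_factor m u1 * focal_factor m u2 * focal_factor m u3)
      with (focal_factor m u3 * focal_factor m u1 * focal_factor m u2) by ring.
    apply (inverted_side a b rho j m P1 P2 u3 u1 u2); assumption.
  - unfold lam, power_scale. transitivity (rho ^ 4 * (4 * j ^ 2 * a ^ 2) / ((1 + m ^ 2) * a ^ 2)).
    + field. repeat split; nra.
    + rewrite hT. field. repeat split; nra.
Qed.

Lemma C9dag_inversion a b rho : 0 < b -> b < a -> 0 < rho ->
  focus_inv a b rho (C9dag a b rho) = (- (a ^ 2 + b ^ 2) / cfoc a b, 0).
Proof.
  intros hb hab hrho.
  pose proof (cfoc_sq a b hb hab) as hc2. pose proof (cfoc_pos a b hb hab) as hc.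
  assert (hd : edist (C9dag a b rho) (f1 a b) = cfoc a b * rho ^ 2 / (2 * b ^ 2)).
  { apply edist_eq.
    - apply Rmult_le_pos; [apply Rmult_le_pos; [lra | apply pow2_ge_0] |].
      apply Rlt_le, Rinv_0_lt_compat. nra.
    - unfold C9dag, f1. cbn [fst snd]. field. lra. }
  unfold focus_inv. rewrite hd. unfold C9dag, f1. cbn [fst snd].
  f_equal.
  - replace (a ^ 2) with (cfoc a b ^ 2 + b ^ 2) by lra. field. repeat split; lra.
  - field. repeat split; lra.
Qed.

Theorem mainTheorem2 (a b rho : R) (hb : 0 < b) (hab : b < a) (hrho : 0 < rho) :
  (forall P1 P2 P3 : pt, three_periodic a b P1 P2 P3 ->
     edist (mittenpunkt (focus_inv a b rho P1) (focus_inv a b rho P2)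
                       (focus_inv a b rho P3))
          (C9dag a b rho) = R9dag a b rho) /\
  focus_inv a b rho (C9dag a b rho) = (- (a ^ 2 + b ^ 2) / cfoc a b, 0).
Proof.
  split.
  - intros P1 P2 P3 hP. exact (periodic_mittenpunkt a b rho P1 P2 P3 hb hab hrho hP).
  - exact (C9dag_inversion a b rho hb hab hrho).
Qed.
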